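(* For every $\alpha \in (0,\tfrac{1}{2})$ there is a (deterministic, non-clairvoyant) online algorithm for dynamic bin packing that makes at most $\frac{4\alpha}{1-2\alpha}\cdot n$ migrations in total on every instance with $n$ items, and such that at every time $t$ the number of bins it has open is at most $\frac{1}{\alpha}\mathrm{OPT}_t + O(\log \rho)$, where $\rho$ is the maximum number of items simultaneously present in the system at any time (the $O(\cdot)$ hides an absolute constant).
   Context: Dynamic bin packing: bins have capacity $1$. Items $i=1,\dots,n$ arrive online at arrival times $a_i\ge 0$, with size $s_i\in[0,1]$ and duration $d_i>0$; item $i$ is present in the system during $[a_i,a_i+d_i)$. The algorithm is non-clairvoyant: at arrival only $s_i$ is revealed, not $d_i$. Upon arrival the algorithm must place the item into an open bin whose current load (total size of the items it contains) plus $s_i$ is at most $1$, or open a new bin for it. A migration moves an already placed item from its bin to another bin (respecting capacity); the number of migrations is the total number of such moves. A bin is open while it contains at least one item. $\mathrm{OPT}_t$ denotes the minimum number of unit-capacity bins needed to pack the items present in the system at time $t$. *)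

From Stdlib Require Import Reals List Permutation Sorting.Sorted Arith.
Import ListNotations.
Open Scope R_scope.

(* An item: arrival time, size, duration. Present during [arr, arr+dur). *)
Record item := mkItem { arr : R; size : R; dur : R }.

Definition valid_item (it : item) : Prop :=
  0 <= arr it /\ 0 <= size it <= 1 /\ 0 < dur it.

Definition instance := list item.
Definition itm (I : instance) (i : nat) : item := nth i I (mkItem 0 0 1).

Definition present_b (I : instance) (t : R) (i : nat) : bool :=
  if Rle_dec (arr (itm I i)) t then
    if Rlt_dec t (arr (itm I i) + dur (itm I i)) then true else false
  else false.

Definition present_items (I : instance) (t : R) : list nat :=
  filter (present_b I t) (seq 0 (length I)).

Definition n_present (I : instance) (t : R) : nat := length (present_items I t).

Definition is_rho (I : instance) (r : nat) : Prop :=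
  (exists t, n_present I t = r) /\ (forall t, (n_present I t <= r)%nat).

Definition packable (I : instance) (t : R) (m : nat) : Prop :=
  exists f : nat -> nat,
    (forall i, In i (present_items I t) -> (f i < m)%nat) /\
    (forall b, (b < m)%nat ->
       fold_right Rplus 0
         (map (fun i => size (itm I i))
              (filter (fun i => Nat.eqb (f i) b) (present_items I t))) <= 1).

Definition is_opt (I : instance) (t : R) (m : nat) : Prop :=
  packable I t m /\ (forall m', packable I t m' -> (m <= m')%nat).

Inductive event := Arr (i : nat) | Dep (i : nat).

Definition ev_time (I : instance) (e : event) : R :=
  match e with
  | Arr i => arr (itm I i)
  | Dep i => arr (itm I i) + dur (itm I i)
  end.

Definition is_dep (e : event) : bool :=
  match e with Dep _ => true | Arr _ => false end.

(* e1 may be processed before e2: earlier time, or same time and not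
   (arrival before departure) -- departures at time t happen before
   arrivals at time t, since items are present on [a, a+d). *)
Definition ev_le (I : instance) (e1 e2 : event) : Prop :=
  ev_time I e1 < ev_time I e2 \/
  (ev_time I e1 = ev_time I e2 /\ (is_dep e1 = true \/ is_dep e2 = false)).

Definition all_events (I : instance) : list event :=
  map Arr (seq 0 (length I)) ++ map Dep (seq 0 (length I)).

(* a valid online presentation of the instance: every event exactly once,
   in chronological order (ties among simultaneous events of the same kind
   in arbitrary order) *)
Definition valid_order (I : instance) (es : list event) : Prop :=
  Permutation es (all_events I) /\ StronglySorted (ev_le I) es.

(* What the algorithm observes: an arrival reveals only the item's label and
   size (never its duration); a departure reveals which item left. *)
Inductive observation := OArr (i : nat) (s : R) | ODep (i : nat).

Definition obs_of (I : instance) (e : event) : observation :=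
  match e with
  | Arr i => OArr i (size (itm I i))
  | Dep i => ODep i
  end.

(* Response to an event: the bin (label) into which an arriving item is put
   (ignored on departures; a label of an empty bin = opening a new bin), then
   a sequence of migrations (item, target bin), performed in order. *)
Record action := mkAction { place : nat; moves : list (nat * nat) }.

(* A deterministic online algorithm: a function of the history of observations
   (oldest first, including the current event). *)
Definition algorithm := list observation -> action.

(* A configuration: which bin each item is in (None = not in the system). *)
Definition config := nat -> option nat.

Definition load (I : instance) (c : config) (b : nat) : R :=
  fold_right Rplus 0
    (map (fun i => match c i with
                   | Some b' => if Nat.eq_dec b' b then size (itm I i) else 0
                   | None => 0
                   end) (seq 0 (length I))).

Definition upd (c : config) (i : nat) (v : option nat) : config :=
  fun j => if Nat.eq_dec j i then v else c j.

Definition apply_move (I : instance) (c : config) (m : nat * nat) : option config :=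
  let (j, b) := m in
  match c j with
  | None => None
  | Some _ => if Rle_dec (load I c b + size (itm I j)) 1
              then Some (upd c j (Some b)) else None
  end.

Definition apply_moves (I : instance) (c : config) (ms : list (nat * nat))
  : option config :=
  fold_left (fun oc m => match oc with None => None | Some c' => apply_move I c' m end)
            ms (Some c).

(* process one event given the history before it; None = infeasible action *)
Definition process (I : instance) (A : algorithm) (hist : list observation)
  (c : config) (e : event) : option config :=
  let act := A (hist ++ [obs_of I e]) in
  match e with
  | Arr i =>
      if Rle_dec (load I c (place act) + size (itm I i)) 1
      then apply_moves I (upd c i (Some (place act))) (moves act)
      else None
  | Dep i => apply_moves I (upd c i None) (moves act)
  end.

Fixpoint run_aux (I : instance) (A : algorithm) (hist : list observation)
  (c : config) (es : list event) : option config :=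
  match es with
  | [] => Some c
  | e :: es' =>
      match process I A hist c e with
      | None => None
      | Some c' => run_aux I A (hist ++ [obs_of I e]) c' es'
      end
  end.

Definition run (I : instance) (A : algorithm) (es : list event) : option config :=
  run_aux I A [] (fun _ => None) es.

Definition migrations (I : instance) (A : algorithm) (es : list event) : nat :=
  fold_right Nat.add 0%nat
    (map (fun k => length (moves (A (map (obs_of I) (firstn (S k) es)))))
         (seq 0 (length es))).

Definition n_events_upto (I : instance) (es : list event) (t : R) : nat :=
  length (filter (fun e => if Rle_dec (ev_time I e) t then true else false) es).

Definition open_bins (I : instance) (c : config) : nat :=
  length (nodup Nat.eq_dec
    (flat_map (fun i => match c i with Some b => [b] | None => [] end)
              (seq 0 (length I)))).

From Stdlib Require Import Reals List Permutation Sorting.Sorted Lia Lra Bool ZArith.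
Import ListNotations.
Open Scope R_scope.

(* Items are rounded to dyadic classes: an item of class [k] has size at most [2^-k] and goes to
   a bin reserved for class [k] that holds at most [2^k] items, so no bin overflows.  Each class
   fills one active bin at a time and seals it when full.  When departures leave a sealed bin of
   class [k] with fewer than [g 2^k] items, these items are reinserted into active bins; since
   the bin held [2^k] items when sealed, at least [(1 - g) 2^k] departures from it pay for fewer
   than [g 2^k] migrations, so there are at most [g / (1 - g)] migrations per item.
   At any time every class has at most one unsealed bin, and a sealed bin of class [k] holds at
   least [g 2^k] items, each of size more than [2^-(k+1)] unless the class was capped.  Capping
   classes at [log2 (rho / g)] keeps [O (log rho)] classes and few capped items per class, so
   there are at most [2 (log2 (rho / g) + 2) + (2 / g) OPT_t] open bins.  Finally
   [g = 4 alpha / (1 + 2 alpha)] gives [g / (1 - g) = 4 alpha / (1 - 2 alpha)] and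
   [2 / g <= 1 / alpha]. *)

(** * Finite sums *)

Definition sumR {A} (l : list A) (f : A -> R) : R :=
  fold_right (fun x acc => f x + acc) 0 l.

Section FiniteSums.
Context {A : Type}.
Implicit Types (l : list A) (f g : A -> R).

Lemma sumR_cons a l f : sumR (a :: l) f = f a + sumR l f.
Proof. reflexivity. Qed.

Lemma sumR_app l1 l2 f : sumR (l1 ++ l2) f = sumR l1 f + sumR l2 f.
Proof.
  induction l1 as [|a l1 IH]; [unfold sumR; cbn; lra|].
  rewrite <- app_comm_cons, !sumR_cons, IH; lra.
Qed.

Lemma sumR_map l f : fold_right Rplus 0 (map f l) = sumR l f.
Proof. induction l as [|a l IH]; cbn; [|rewrite IH]; reflexivity. Qed.

Lemma sumR_le l f g : (forall x, In x l -> f x <= g x) -> sumR l f <= sumR l g.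
Proof.
  induction l as [|a l IH]; intros H; cbn; [lra|].
  apply Rplus_le_compat; [apply H; left|apply IH; intros; apply H; right]; auto.
Qed.

Lemma sumR_ext l f g : (forall x, In x l -> f x = g x) -> sumR l f = sumR l g.
Proof. intros H. apply Rle_antisym; apply sumR_le; intros x Hx; rewrite H; auto; lra. Qed.

Lemma sumR_plus l f g : sumR l (fun x => f x + g x) = sumR l f + sumR l g.
Proof. induction l as [|a l IH]; [unfold sumR; cbn; lra|]. rewrite !sumR_cons, IH; lra. Qed.

Lemma sumR_scale l f c : sumR l (fun x => c * f x) = c * sumR l f.
Proof. induction l as [|a l IH]; [unfold sumR; cbn; lra|]. rewrite !sumR_cons, IH; lra. Qed.

Lemma sumR_const l c : sumR l (fun _ => c) = c * INR (length l).
Proof.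
  induction l as [|a l IH]; [unfold sumR; cbn; lra|].
  rewrite sumR_cons, IH. cbn [length]; rewrite S_INR; lra.
Qed.

Lemma sumR_nonneg l f : (forall x, In x l -> 0 <= f x) -> 0 <= sumR l f.
Proof. intros H. rewrite <- (Rmult_0_l (INR (length l))), <- sumR_const. apply sumR_le; auto. Qed.

Lemma sumR_filter (p : A -> bool) l f :
  sumR (filter p l) f = sumR l (fun x => if p x then f x else 0).
Proof.
  induction l as [|a l IH]; [reflexivity|]. cbn [filter]. rewrite sumR_cons, <- IH.
  destruct (p a); [rewrite sumR_cons|]; lra.
Qed.

Lemma INR_length_filter (p : A -> bool) l :
  INR (length (filter p l)) = sumR l (fun x => if p x then 1 else 0).
Proof. rewrite <- (Rmult_1_l (INR _)), <- sumR_const, sumR_filter. reflexivity. Qed.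

End FiniteSums.

Lemma sumR_exchange {A B} (l : list A) (l' : list B) (h : A -> B -> R) :
  sumR l (fun x => sumR l' (h x)) = sumR l' (fun y => sumR l (fun x => h x y)).
Proof.
  induction l as [|a l IH].
  - transitivity (sumR l' (fun _ => 0)); [rewrite sumR_const; cbn; lra|apply sumR_ext; reflexivity].
  - rewrite sumR_cons, IH, <- sumR_plus. reflexivity.
Qed.

Lemma sumR_indicator l x c : NoDup l ->
  sumR l (fun b => if Nat.eqb x b then c else 0) = if in_dec Nat.eq_dec x l then c else 0.
Proof.
  induction 1 as [|y l Hy Hnd IH]; [reflexivity|]. rewrite sumR_cons, IH.
  destruct (Nat.eqb_spec x y) as [<-|Hxy].
  - destruct (in_dec Nat.eq_dec x l); [contradiction|].
    destruct (in_dec Nat.eq_dec x (x :: l)) as [|Hn]; [lra|exfalso; apply Hn; left; auto].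
  - destruct (in_dec Nat.eq_dec x l) as [Hin|Hin];
      destruct (in_dec Nat.eq_dec x (y :: l)) as [Hin'|Hin']; cbn in *; try lra; intuition congruence.
Qed.

Lemma sumR_partition {A} (l : list A) (key : A -> nat) m f :
  (forall x, In x l -> (key x < m)%nat) ->
  sumR l f = sumR (seq 0 m) (fun b => sumR (filter (fun x => Nat.eqb (key x) b) l) f).
Proof.
  intros H.
  transitivity (sumR l (fun x => sumR (seq 0 m) (fun b => if Nat.eqb (key x) b then f x else 0))).
  - apply sumR_ext; intros x Hx. rewrite sumR_indicator by apply seq_NoDup.
    destruct (in_dec _ _ _) as [|Hn]; [reflexivity|].
    exfalso; apply Hn, in_seq. specialize (H x Hx); lia.
  - rewrite sumR_exchange. apply sumR_ext; intros b _. rewrite sumR_filter. reflexivity.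
Qed.

Lemma sumR_remove_le a l f : (forall i, In i l -> 0 <= f i) ->
  sumR (remove Nat.eq_dec a l) f <= sumR l f.
Proof.
  induction l as [|x l IH]; intros Hf; [cbn; lra|].
  assert (0 <= f x) by (apply Hf; left; auto).
  assert (sumR (remove Nat.eq_dec a l) f <= sumR l f) by (apply IH; intros; apply Hf; right; auto).
  cbn [remove]. destruct (Nat.eq_dec a x); rewrite ?sumR_cons; lra.
Qed.

Lemma sumR_remove_in_le a l f : In a l -> (forall i, In i l -> 0 <= f i) ->
  f a + sumR (remove Nat.eq_dec a l) f <= sumR l f.
Proof.
  induction l as [|x l IH]; intros Ha Hf; [contradiction|].
  cbn [remove]. rewrite sumR_cons. destruct (Nat.eq_dec a x) as [<-|Hax].
  - pose proof (sumR_remove_le a l f (fun i H => Hf i (or_intror H))). lra.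
  - destruct Ha as [->|Ha]; [congruence|]. rewrite sumR_cons.
    assert (f a + sumR (remove Nat.eq_dec a l) f <= sumR l f)
      by (apply IH; auto; intros; apply Hf; right; auto).
    lra.
Qed.

Lemma sumR_incl_le (l l' : list nat) f : NoDup l -> incl l l' -> (forall i, In i l' -> 0 <= f i) ->
  sumR l f <= sumR l' f.
Proof.
  intros Hnd. revert l'. induction Hnd as [|a l Hna Hnd IH]; intros l' Hinc Hf.
  - change (0 <= sumR l' f). apply sumR_nonneg; auto.
  - assert (Ha : In a l') by (apply Hinc; left; auto).
    assert (sumR l f <= sumR (remove Nat.eq_dec a l') f).
    { apply IH.
      - intros x Hx. apply in_in_remove; [intros ->; contradiction|apply Hinc; right; auto].
      - intros i Hi. apply Hf. apply in_remove in Hi. tauto. }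
    pose proof (sumR_remove_in_le a l' f Ha Hf). rewrite sumR_cons. lra.
Qed.

Lemma sumR_le_count l m (h : nat -> R) a : NoDup l -> 0 <= a ->
  (forall i, In i l -> h i <= if in_dec Nat.eq_dec i m then a else 0) ->
  sumR l h <= a * INR (length m).
Proof.
  intros Hnd Ha Hh.
  apply Rle_trans with
    (sumR l (fun i => a * (if (if in_dec Nat.eq_dec i m then true else false) then 1 else 0))).
  - apply sumR_le. intros i Hi. specialize (Hh i Hi). destruct (in_dec Nat.eq_dec i m); lra.
  - rewrite sumR_scale, <- INR_length_filter. apply Rmult_le_compat_l, le_INR; auto.
    apply NoDup_incl_length; [apply NoDup_filter; auto|].
    intros x Hx. apply filter_In in Hx as [_ Hx]. destruct (in_dec Nat.eq_dec x m); [auto|discriminate].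
Qed.

Lemma perm_filter_length {A} (p : A -> bool) l l' : Permutation l l' ->
  length (filter p l) = length (filter p l').
Proof. induction 1 as [|x l l' _ IH|x y l|]; cbn; try destruct (p x); try destruct (p y); cbn; lia. Qed.

Lemma filter_filter {A} (p q : A -> bool) l :
  filter q (filter p l) = filter (fun x => andb (p x) (q x)) l.
Proof.
  induction l as [|a l IH]; cbn; [reflexivity|].
  destruct (p a); cbn; [destruct (q a)|]; cbn; rewrite IH; reflexivity.
Qed.

Lemma filter_length_mono {A} (p q : A -> bool) l : (forall x, q x = true -> p x = true) ->
  (length (filter q l) <= length (filter p l))%nat.
Proof.
  intros H. induction l as [|a l IH]; cbn; [lia|].
  destruct (q a) eqn:E; [rewrite (H a E); cbn; lia|destruct (p a); cbn; lia].
Qed.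

Lemma length_filter_change (p q : nat -> bool) l j : NoDup l -> In j l ->
  (forall i, i <> j -> p i = q i) ->
  (length (filter p l) + (if q j then 1 else 0) = length (filter q l) + (if p j then 1 else 0))%nat.
Proof.
  induction 1 as [|a l Hna Hnd IH]; intros Hj Hpq; [contradiction|].
  cbn [filter]. destruct (Nat.eq_dec a j) as [<-|Haj].
  - rewrite (filter_ext_in p q) by (intros i Hi; apply Hpq; intros ->; contradiction).
    destruct (p a), (q a); cbn; lia.
  - destruct Hj as [->|Hj]; [congruence|]. rewrite (Hpq a Haj).
    specialize (IH Hj Hpq). destruct (q a); cbn; lia.
Qed.

Lemma NoDup_map_inj_on {A B} (f : A -> B) l : NoDup l ->
  (forall x y, In x l -> In y l -> f x = f y -> x = y) -> NoDup (map f l).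
Proof.
  induction 1 as [|a l Hna Hnd IH]; intros Hinj; cbn; constructor.
  - intros Hin. apply in_map_iff in Hin as [y [E Hy]].
    assert (y = a) by (apply Hinj; cbn; auto). subst; contradiction.
  - apply IH. intros; apply Hinj; cbn; auto.
Qed.

Lemma StronglySorted_app_inv_rel {A} (R : A -> A -> Prop) l1 l2 : StronglySorted R (l1 ++ l2) ->
  forall x y, In x l1 -> In y l2 -> R x y.
Proof.
  induction l1 as [|a l1 IH]; cbn; intros H x y Hx Hy; [contradiction|].
  apply StronglySorted_inv in H as [Hs Hf]. destruct Hx as [<-|Hx]; [|auto].
  rewrite Forall_forall in Hf. apply Hf, in_or_app; auto.
Qed.

Lemma StronglySorted_app_r {A} (R : A -> A -> Prop) l1 l2 :
  StronglySorted R (l1 ++ l2) -> StronglySorted R l2.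
Proof. induction l1 as [|a l1 IH]; cbn; [auto|intros H; apply IH, (StronglySorted_inv H)]. Qed.

(** * Dyadic size classes *)

Lemma pow2_pos k : (0 < 2 ^ k)%nat.
Proof. induction k; cbn; lia. Qed.

Lemma INR_pow2_pos k : 0 < INR (2 ^ k).
Proof. apply lt_0_INR, pow2_pos. Qed.

Lemma dyadic_fit (ld sz : R) (n k : nat) : ld <= INR n * / INR (2 ^ k) -> (n < 2 ^ k)%nat ->
  sz <= / INR (2 ^ k) -> ld + sz <= 1.
Proof.
  intros Hl Hn Hs. pose proof (INR_pow2_pos k).
  assert (INR n + 1 <= INR (2 ^ k)) by (rewrite <- S_INR; apply le_INR; lia).
  assert (INR n * / INR (2 ^ k) + / INR (2 ^ k) <= 1).
  { replace (INR n * / INR (2 ^ k) + / INR (2 ^ k)) with ((INR n + 1) / INR (2 ^ k)) by (field; lra).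
    apply Rmult_le_reg_r with (INR (2 ^ k)); auto. unfold Rdiv. rewrite Rmult_assoc, Rinv_l; lra. }
  lra.
Qed.

Fixpoint find_class (sz : R) (k fuel : nat) : nat :=
  match fuel with
  | O => k
  | S f => if Rlt_dec (/ INR (2 ^ S k)) sz then k else find_class sz (S k) f
  end.

Definition size_class (sz : R) (cap : nat) : nat := find_class sz 0 cap.

Lemma find_class_spec sz fuel : forall k, let r := find_class sz k fuel in
  (k <= r <= k + fuel)%nat /\ (sz <= / INR (2 ^ k) -> sz <= / INR (2 ^ r)) /\
  (sz <= / INR (2 ^ S r) -> r = (k + fuel)%nat).
Proof.
  induction fuel as [|fuel IH]; intros k; cbn [find_class].
  - split; [lia|auto].
  - destruct (Rlt_dec (/ INR (2 ^ S k)) sz) as [Hl|Hl].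
    + split; [lia|]. split; [auto|intros; lra].
    + destruct (IH (S k)) as [Hr [Hfit Hcap]]. split; [lia|]. split.
      * intros _. apply Hfit. lra.
      * intros H. rewrite (Hcap H). lia.
Qed.

Lemma size_class_spec sz cap : 0 <= sz <= 1 ->
  (size_class sz cap <= cap)%nat /\ sz <= / INR (2 ^ size_class sz cap) /\
  (sz <= / INR (2 ^ S (size_class sz cap)) -> size_class sz cap = cap).
Proof.
  intros Hs. unfold size_class. destruct (find_class_spec sz cap 0) as [Hr [Hfit Hcap]].
  split; [lia|]. split.
  - apply Hfit. cbn. rewrite Rinv_1. lra.
  - intros H. rewrite (Hcap H). lia.
Qed.

Definition class_cap (g : R) (P : nat) : nat := Z.to_nat (up (ln (INR P / g) / ln 2)).

Lemma class_cap_spec g P : 0 < g < 1 -> (1 <= P)%nat ->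
  INR P <= g * INR (2 ^ class_cap g P) /\ INR (class_cap g P) <= ln (INR P / g) / ln 2 + 1.
Proof.
  intros Hg HP. unfold class_cap. set (y := ln (INR P / g) / ln 2).
  assert (Hl2 : 0 < ln 2) by (pose proof ln_lt_2; lra).
  assert (HPg : 1 < INR P / g).
  { assert (1 <= INR P) by (replace 1 with (INR 1) by reflexivity; apply le_INR; lia).
    apply Rmult_lt_reg_r with g; [lra|]. unfold Rdiv. rewrite Rmult_assoc, Rinv_l; lra. }
  assert (Hy : 0 < y).
  { apply Rdiv_lt_0_compat; auto. rewrite <- ln_1. apply ln_increasing; lra. }
  destruct (archimed y) as [Hup1 Hup2].
  assert (Hn : INR (Z.to_nat (up y)) = IZR (up y))
    by (rewrite INR_IZR_INZ, Z2Nat.id; [reflexivity|apply le_IZR; lra]).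
  rewrite Hn. split; [|lra].
  assert (Hlt : ln (INR P / g) < ln (2 ^ Z.to_nat (up y))).
  { rewrite ln_pow, Hn by lra. apply Rmult_lt_reg_r with (/ ln 2).
    - apply Rinv_0_lt_compat; auto.
    - rewrite Rmult_assoc, Rinv_r by lra. change (ln (INR P / g) * / ln 2) with y. lra. }
  apply ln_lt_inv in Hlt; [| lra | apply pow_lt; lra].
  rewrite pow_INR. replace (INR 2) with 2 by (cbn; lra).
  replace (INR P) with (g * (INR P / g)) by (field; lra).
  apply Rmult_le_compat_l; lra.
Qed.

Lemma ln_le_mono x y : 0 < x -> x <= y -> ln x <= ln y.
Proof. intros Hx [H|<-]; [left; apply ln_increasing; auto|lra]. Qed.

Lemma ln_le_sub1 y : 0 < y -> ln y <= y - 1.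
Proof. intros Hy. pose proof (exp_ineq1_le (ln y)) as H. rewrite exp_ln in H by auto. lra. Qed.

Lemma ln_INR_nonneg n : 0 <= ln (INR n).
Proof.
  destruct n as [|n].
  - cbn. unfold ln. destruct (Rlt_dec 0 0) as [H|]; [exfalso; exact (Rlt_irrefl 0 H)|lra].
  - rewrite <- ln_1. apply ln_le_mono; [lra|]. rewrite S_INR. pose proof (pos_INR n). lra.
Qed.

Definition class_bound (g : R) (rho : nat) : R := ln (INR rho / g) / ln 2 + 1.

Lemma class_cap_le_bound g P rho : 0 < g < 1 -> (1 <= P <= rho)%nat ->
  INR (class_cap g P) <= class_bound g rho.
Proof.
  intros Hg HP. destruct (class_cap_spec g P Hg ltac:(lia)) as [_ Hcap].
  eapply Rle_trans; [exact Hcap|]. unfold class_bound. apply Rplus_le_compat_r.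
  apply Rmult_le_compat_r; [left; apply Rinv_0_lt_compat; pose proof ln_lt_2; lra|].
  apply ln_le_mono.
  - apply Rdiv_lt_0_compat; [apply lt_0_INR; lia|lra].
  - apply Rmult_le_compat_r; [left; apply Rinv_0_lt_compat; lra|apply le_INR; lia].
Qed.

Lemma nat_above (B : R) : 0 <= B ->
  exists N : nat, (forall n, INR n <= B -> (n < N)%nat) /\ INR N <= B + 1.
Proof.
  intros HB. destruct (archimed B) as [Hup1 Hup2].
  assert (HN : INR (Z.to_nat (up B)) = IZR (up B))
    by (rewrite INR_IZR_INZ, Z2Nat.id; [reflexivity|apply le_IZR; lra]).
  exists (Z.to_nat (up B)). split; [|lra].
  intros n Hn. apply INR_lt. lra.
Qed.

(** * The algorithm *)

Definition fupd {A} (f : nat -> A) (x : nat) (v : A) : nat -> A :=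
  fun y => if Nat.eq_dec y x then v else f y.

Lemma fupd_eq {A} (f : nat -> A) x v : fupd f x v x = v.
Proof. unfold fupd. destruct (Nat.eq_dec x x); congruence. Qed.

Lemma fupd_neq {A} (f : nat -> A) x v y : y <> x -> fupd f x v y = f y.
Proof. unfold fupd. destruct (Nat.eq_dec y x); congruence. Qed.

(* Item [i] of size class [k] has size at most [2^-k]; a bin of class [k] receives only items
   of class [k], at most [2^k] of them.  [active k] is the bin of class [k] being filled; once
   it holds [2^k] items it is [sealed], and [credit b] counts the departures from [b] since
   then.  Bins are labelled [0, 1, ...], and [next_bin] is the first label never used. *)
Record state := mkState {
  live : list nat; bin_of : nat -> nat; class_of : nat -> nat; bin_class : nat -> nat;
  sealed : nat -> bool; credit : nat -> nat; active : nat -> option nat; next_bin : nat }.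

Definition items_in (s : state) (b : nat) : list nat :=
  filter (fun j => Nat.eqb (bin_of s j) b) (live s).

Definition occupancy (s : state) (b : nat) : nat := length (items_in s b).

Definition get_active (s : state) (k : nat) : state * nat :=
  match active s k with
  | Some b => (s, b)
  | None =>
      (mkState (live s) (bin_of s) (class_of s) (fupd (bin_class s) (next_bin s) k) (sealed s)
         (credit s) (fupd (active s) k (Some (next_bin s))) (S (next_bin s)), next_bin s)
  end.

Definition live_with (s : state) (j : nat) : list nat :=
  if in_dec Nat.eq_dec j (live s) then live s else j :: live s.

Definition assign (s : state) (j b : nat) : state :=
  mkState (live_with s j) (fupd (bin_of s) j b) (class_of s) (bin_class s) (sealed s) (credit s)
    (active s) (next_bin s).

Definition seal_if_full (s : state) (k b : nat) : state :=
  if Nat.eqb (occupancy s b) (2 ^ k) then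
    mkState (live s) (bin_of s) (class_of s) (bin_class s) (fupd (sealed s) b true) (credit s)
      (fupd (active s) k None) (next_bin s)
  else s.

Definition insert_item (s : state) (j k : nat) : state * nat :=
  let (s1, b) := get_active s k in (seal_if_full (assign s1 j b) k b, b).

Fixpoint reinsert (s : state) (l : list nat) (k : nat) : state * list (nat * nat) :=
  match l with
  | [] => (s, [])
  | j :: l' => let (s1, b) := insert_item s j k in
               let (s2, ms) := reinsert s1 l' k in (s2, (j, b) :: ms)
  end.

Definition forget (s : state) (i : nat) : state :=
  mkState (filter (fun j => negb (Nat.eqb j i)) (live s)) (bin_of s) (class_of s) (bin_class s)
    (sealed s) (credit s) (active s) (next_bin s).

Definition charge (s : state) (b : nat) : state :=
  mkState (live s) (bin_of s) (class_of s) (bin_class s) (sealed s)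
    (fupd (credit s) b (S (credit s b))) (active s) (next_bin s).

Definition unseal (s : state) (b : nat) : state :=
  mkState (live s) (bin_of s) (class_of s) (bin_class s) (fupd (sealed s) b false)
    (fupd (credit s) b O) (active s) (next_bin s).

Definition depart (g : R) (s : state) (i : nat) : state * list (nat * nat) :=
  if in_dec Nat.eq_dec i (live s) then
    let b := bin_of s i in
    let s1 := forget s i in
    if sealed s b then
      let s2 := charge s1 b in
      if Rlt_dec (INR (occupancy s2 b)) (g * INR (2 ^ bin_class s b)) then
        let s3 := unseal s2 b in reinsert s3 (items_in s3 b) (bin_class s b)
      else (s2, [])
    else (s1, [])
  else (s, []).

Definition classify (s : state) (i k : nat) : state :=
  mkState (live s) (bin_of s) (fupd (class_of s) i k) (bin_class s) (sealed s) (credit s)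
    (active s) (next_bin s).

Definition arrive (g : R) (s : state) (i : nat) (sz : R) : state * nat :=
  let k := size_class sz (class_cap g (S (length (live s)))) in
  insert_item (classify s i k) i k.

Definition alg_step (g : R) (s : state) (o : observation) : state * action :=
  match o with
  | OArr i sz => let (s', b) := arrive g s i sz in (s', mkAction b [])
  | ODep i => let (s', ms) := depart g s i in (s', mkAction O ms)
  end.

Definition init_state : state :=
  mkState [] (fun _ => O) (fun _ => O) (fun _ => O) (fun _ => false) (fun _ => O) (fun _ => None) O.

Definition state_of (g : R) (h : list observation) : state :=
  fold_left (fun s o => fst (alg_step g s o)) h init_state.

Definition dbp_alg (g : R) : algorithm :=
  fun h => snd (alg_step g (state_of g (removelast h)) (last h (ODep O))).

Lemma dbp_alg_snoc g h o : dbp_alg g (h ++ [o]) = snd (alg_step g (state_of g h) o).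
Proof. unfold dbp_alg. rewrite removelast_last, last_last. reflexivity. Qed.

Lemma state_of_snoc g h o : state_of g (h ++ [o]) = fst (alg_step g (state_of g h) o).
Proof. unfold state_of. rewrite fold_left_app. reflexivity. Qed.

(** * Invariants *)

Definition potential (s : state) : R := sumR (seq 0 (next_bin s)) (fun b => INR (credit s b)).

Definition isize (I : instance) (i : nat) : R := size (itm I i).

(* A capped item would fit the next class; by [size_class_spec] this only happens at the cap.
   Capped items may be too small to pay for their bins by volume, so [wf_capped] bounds their
   number instead. *)
Definition capped (I : instance) (s : state) (j : nat) : bool :=
  if Rle_dec (isize I j) (/ INR (2 ^ S (class_of s j))) then true else false.

Definition capped_count (I : instance) (s : state) (l : list nat) (k : nat) : nat :=
  length (filter (fun j => andb (Nat.eqb (class_of s j) k) (capped I s j)) l).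

Record wf (I : instance) (g Bc : R) (s : state) : Prop := {
  wf_nodup : NoDup (live s);
  wf_item : forall i, In i (live s) ->
    (i < length I)%nat /\ (bin_of s i < next_bin s)%nat /\ bin_class s (bin_of s i) = class_of s i /\
    isize I i <= / INR (2 ^ class_of s i) /\ INR (class_of s i) <= Bc;
  wf_active : forall k b, active s k = Some b ->
    (b < next_bin s)%nat /\ bin_class s b = k /\ (occupancy s b < 2 ^ k)%nat /\ sealed s b = false;
  wf_unused : forall b, (next_bin s <= b)%nat -> credit s b = O /\ sealed s b = false;
  wf_capped : forall k, INR (capped_count I s (live s) k) <= g * INR (2 ^ k) }.

Definition sealed_or_active_but (s : state) (X : nat) : Prop :=
  forall i, In i (live s) -> bin_of s i <> X ->
    sealed s (bin_of s i) = true \/ active s (bin_class s (bin_of s i)) = Some (bin_of s i).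

Definition sealed_or_active (s : state) : Prop :=
  forall i, In i (live s) ->
    sealed s (bin_of s i) = true \/ active s (bin_class s (bin_of s i)) = Some (bin_of s i).

Definition sealed_dense (g : R) (s : state) : Prop :=
  forall b, sealed s b = true ->
    g * INR (2 ^ bin_class s b) <= INR (occupancy s b) /\
    (2 ^ bin_class s b <= occupancy s b + credit s b)%nat.

Definition idle (s : state) (x : nat) : Prop :=
  (x < next_bin s)%nat /\ sealed s x = false /\ forall k, active s k <> Some x.

Definition represents (s : state) (c : config) : Prop :=
  (forall i, In i (live s) -> c i = Some (bin_of s i)) /\ (forall i, ~ In i (live s) -> c i = None).

Record good (I : instance) (g Bc : R) (s : state) (c : config) : Prop := {
  good_wf : wf I g Bc s;
  good_represents : represents s c;
  good_sealed_or_active : sealed_or_active s;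
  good_dense : sealed_dense g s }.

Arguments wf_nodup {I g Bc s}.
Arguments wf_item {I g Bc s}.
Arguments wf_active {I g Bc s}.
Arguments wf_unused {I g Bc s}.
Arguments wf_capped {I g Bc s}.
Arguments good_wf {I g Bc s c}.
Arguments good_represents {I g Bc s c}.

Lemma occupancy_zero s b : (forall i, In i (live s) -> bin_of s i <> b) -> occupancy s b = O.
Proof.
  intros H. unfold occupancy, items_in. rewrite (filter_ext_in _ (fun _ => false)).
  - rewrite filter_false. reflexivity.
  - intros i Hi. apply Nat.eqb_neq, H; auto.
Qed.

Lemma occupancy_assign s j b x : NoDup (live s) -> (In j (live s) -> bin_of s j <> b) ->
  (x = b -> occupancy (assign s j b) x = S (occupancy s x)) /\
  (x <> b -> (In j (live s) -> bin_of s j <> x) -> occupancy (assign s j b) x = occupancy s x).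
Proof.
  intros Hnd Hjb. unfold occupancy, items_in, assign, live_with. cbn [live bin_of].
  assert (Hother : forall y i, i <> j -> Nat.eqb (bin_of s i) y = Nat.eqb (fupd (bin_of s) j b i) y)
    by (intros; rewrite fupd_neq; auto).
  destruct (in_dec Nat.eq_dec j (live s)) as [Hin|Hin].
  - pose proof (fun y => length_filter_change _ _ _ j Hnd Hin (Hother y)) as Hc. cbv beta in Hc.
    split; intros Hx.
    + subst x. specialize (Hc b). rewrite fupd_eq, Nat.eqb_refl in Hc.
      destruct (Nat.eqb_spec (bin_of s j) b); [exfalso; apply (Hjb Hin); auto|lia].
    + intros Hjx. specialize (Hc x). rewrite fupd_eq in Hc.
      destruct (Nat.eqb_spec b x); [congruence|]. destruct (Nat.eqb_spec (bin_of s j) x); [tauto|lia].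
  - cbn [filter]. rewrite fupd_eq.
    rewrite (filter_ext_in (fun i => Nat.eqb (fupd (bin_of s) j b i) x) (fun i => Nat.eqb (bin_of s i) x))
      by (intros i Hi; symmetry; apply Hother; intros ->; contradiction).
    split; intros Hx; [subst; rewrite Nat.eqb_refl; reflexivity|].
    destruct (Nat.eqb_spec b x); [congruence|reflexivity].
Qed.

Lemma occupancy_forget s i x : NoDup (live s) -> In i (live s) ->
  (occupancy (forget s i) x + (if Nat.eqb (bin_of s i) x then 1 else 0) = occupancy s x)%nat.
Proof.
  intros Hnd Hi. unfold occupancy, items_in. cbn. rewrite filter_filter.
  induction Hnd as [|a l Hna Hnd IH]; [contradiction|].
  cbn [filter]. destruct (Nat.eq_dec a i) as [->|Hai].
  - rewrite Nat.eqb_refl. cbn.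
    rewrite (filter_ext_in _ (fun y => Nat.eqb (bin_of s y) x)).
    + destruct (Nat.eqb (bin_of s i) x); cbn; lia.
    + intros y Hy. destruct (Nat.eqb_spec y i) as [->|]; [contradiction|reflexivity].
  - destruct Hi as [->|Hi]; [congruence|]. rewrite (proj2 (Nat.eqb_neq _ _) Hai). cbn.
    specialize (IH Hi). destruct (Nat.eqb (bin_of s a) x); cbn; lia.
Qed.

Lemma seal_if_full_frame s k b : let s' := seal_if_full s k b in
  live s' = live s /\ bin_of s' = bin_of s /\ class_of s' = class_of s /\ bin_class s' = bin_class s /\
  credit s' = credit s /\ next_bin s' = next_bin s /\ occupancy s' = occupancy s.
Proof. unfold seal_if_full. destruct (Nat.eqb _ _); repeat split. Qed.

Lemma seal_if_full_flags s k b : let s' := seal_if_full s k b in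
  let full := Nat.eqb (occupancy s b) (2 ^ k) in
  (forall x, sealed s' x = (full && Nat.eqb x b) || sealed s x) /\
  (forall k', active s' k' = if full && Nat.eqb k' k then None else active s k').
Proof.
  unfold seal_if_full. destruct (Nat.eqb _ _); cbn; split; intros x; auto.
  - unfold fupd. destruct (Nat.eq_dec x b), (Nat.eqb_spec x b); cbn; congruence.
  - unfold fupd. destruct (Nat.eq_dec x k), (Nat.eqb_spec x k); cbn; congruence.
Qed.

Lemma sumR_fupd l f b v : NoDup l -> In b l ->
  sumR l (fun i => INR (fupd f b v i)) = sumR l (fun i => INR (f i)) - INR (f b) + INR v.
Proof.
  intros Hnd Hb.
  transitivity (sumR l (fun i => INR (f i) + (if Nat.eqb b i then INR v - INR (f b) else 0))).
  - apply sumR_ext. intros i _. unfold fupd.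
    destruct (Nat.eq_dec i b), (Nat.eqb_spec b i); subst; try congruence; lra.
  - rewrite sumR_plus, sumR_indicator by auto. destruct (in_dec Nat.eq_dec b l); [lra|contradiction].
Qed.

Lemma potential_charge s b : (b < next_bin s)%nat -> potential (charge s b) = potential s + 1.
Proof.
  intros Hb. unfold potential, charge; cbn [credit next_bin].
  rewrite sumR_fupd, S_INR by (apply seq_NoDup || (apply in_seq; lia)). lra.
Qed.

Lemma potential_unseal s b : (b < next_bin s)%nat ->
  potential (unseal s b) = potential s - INR (credit s b).
Proof.
  intros Hb. unfold potential, unseal; cbn [credit next_bin].
  rewrite sumR_fupd by (apply seq_NoDup || (apply in_seq; lia)). cbn. lra.
Qed.

Lemma rebuild_cost g (n r k : nat) : 0 < g < 1 ->
  INR n < g * INR (2 ^ k) -> (2 ^ k <= n + S r)%nat -> INR n <= g / (1 - g) * (INR r + 1).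
Proof.
  intros Hg Hlt Hle. apply le_INR in Hle. rewrite plus_INR, S_INR in Hle.
  assert (g * INR (2 ^ k) <= g * (INR n + (INR r + 1))) by (apply Rmult_le_compat_l; lra).
  replace (g / (1 - g) * (INR r + 1)) with ((g * (INR r + 1)) / (1 - g)) by (field; lra).
  apply Rmult_le_reg_r with (1 - g); [lra|]. unfold Rdiv. rewrite Rmult_assoc, Rinv_l; lra.
Qed.

Lemma represents_assign s s' c j b : live s' = live_with s j -> bin_of s' = fupd (bin_of s) j b ->
  represents s c -> represents s' (upd c j (Some b)).
Proof.
  intros Elive Ebin [Hin Hout].
  split; intros i Hi; rewrite Elive in Hi; rewrite ?Ebin; unfold upd, fupd, live_with in *;
    destruct (Nat.eq_dec i j) as [->|Hij]; auto.
  - apply Hin. destruct (in_dec Nat.eq_dec j (live s)); [auto|destruct Hi; [congruence|auto]].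
  - destruct (in_dec Nat.eq_dec j (live s)); [contradiction|]. exfalso; apply Hi; left; auto.
  - apply Hout. intros Hi'. apply Hi. destruct (in_dec Nat.eq_dec j (live s)); [auto|right; auto].
Qed.

Lemma apply_moves_cons I c m ms : apply_moves I c (m :: ms) =
  match apply_move I c m with Some c1 => apply_moves I c1 ms | None => None end.
Proof.
  unfold apply_moves. cbn. destruct (apply_move I c m); [reflexivity|].
  induction ms; cbn; auto.
Qed.

Lemma capped_count_cons I s j l k : capped_count I s (j :: l) k =
  ((if andb (Nat.eqb (class_of s j) k) (capped I s j) then 1 else 0) + capped_count I s l k)%nat.
Proof. unfold capped_count. cbn [filter]. destruct (andb _ _); reflexivity. Qed.

Lemma wf_init I g Bc : 0 < g -> wf I g Bc init_state.
Proof.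
  intros Hg. constructor; cbn; try tauto; try discriminate; [constructor|].
  intros k. unfold capped_count. cbn. apply Rmult_le_pos; [lra|apply pos_INR].
Qed.

Section Invariants.
Variables (I : instance) (g Bc : R).
Hypothesis Hg : 0 < g < 1.
Lemma get_active_spec s k s1 b : wf I g Bc s -> get_active s k = (s1, b) ->
  live s1 = live s /\ bin_of s1 = bin_of s /\ class_of s1 = class_of s /\ sealed s1 = sealed s /\
  credit s1 = credit s /\ active s1 k = Some b /\ (forall k', k' <> k -> active s1 k' = active s k') /\
  (forall x, (x < next_bin s)%nat -> bin_class s1 x = bin_class s x) /\ bin_class s1 b = k /\
  (next_bin s <= next_bin s1)%nat /\ (b < next_bin s1)%nat /\ (occupancy s b < 2 ^ k)%nat /\
  sealed s b = false /\ (active s k = Some b \/ (b = next_bin s /\ active s k = None)) /\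
  potential s1 = potential s.
Proof.
  intros [H1 H2 H3 H4 H5] Ho. unfold get_active in Ho. destruct (active s k) as [b0|] eqn:E.
  - injection Ho as <- <-. destruct (H3 _ _ E) as [? [? [? ?]]]. repeat split; auto; lia.
  - injection Ho as <- <-.
    assert (Hempty : occupancy s (next_bin s) = O).
    { apply occupancy_zero. intros i Hi. specialize (H2 i Hi). lia. }
    assert (Hpot : sumR (seq 0 (S (next_bin s))) (fun b => INR (credit s b)) = potential s).
    { rewrite seq_S, sumR_app, sumR_cons, Nat.add_0_l, (proj1 (H4 (next_bin s) (le_n _))).
      unfold potential, sumR at 2. cbn -[sumR]. lra. }
    cbn -[occupancy potential].
    repeat split; auto; try apply fupd_eq; try (intros; apply fupd_neq; lia).
    + rewrite Hempty. apply pow2_pos.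
    + apply H4; lia.
Qed.

Lemma insert_item_fields s j k s' b : wf I g Bc s -> (In j (live s) -> idle s (bin_of s j)) ->
  insert_item s j k = (s', b) ->
  exists full : bool,
  live s' = live_with s j /\ bin_of s' = fupd (bin_of s) j b /\ class_of s' = class_of s /\
  credit s' = credit s /\ potential s' = potential s /\
  (next_bin s <= next_bin s')%nat /\ (b < next_bin s')%nat /\
  bin_class s' b = k /\ (forall x, (x < next_bin s)%nat -> bin_class s' x = bin_class s x) /\
  (forall x, sealed s' x = (full && Nat.eqb x b) || sealed s x) /\
  (forall k', active s' k' = if Nat.eqb k' k then (if full then None else Some b) else active s k') /\
  (forall x, x <> b -> (In j (live s) -> bin_of s j <> x) -> occupancy s' x = occupancy s x) /\
  (full = true -> occupancy s' b = 2 ^ k)%nat /\ (full = false -> occupancy s' b < 2 ^ k)%nat /\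
  (occupancy s b < 2 ^ k)%nat /\ sealed s b = false /\
  (active s k = Some b \/ (b = next_bin s /\ active s k = None)).
Proof.
  intros Hwf Hold Hins. unfold insert_item in Hins.
  destruct (get_active s k) as [s1 b1] eqn:Eg. injection Hins as <- <-.
  destruct (get_active_spec s k s1 b1 Hwf Eg) as
    (Elive & Ebin & Ecls & Esealed & Ecredit & Eact & Eact' & Eclass & Eclassb & Hnext & Hb1 & Hocc &
     Hsb & Hor & Epot).
  assert (Hjb : In j (live s) -> bin_of s j <> b1).
  { intros Hj E. destruct (Hold Hj) as [Hlt [_ Hna]]. rewrite E in *.
    destruct Hor as [Hc|[-> _]]; [exact (Hna k Hc)|lia]. }
  assert (Hnd1 : NoDup (live s1)) by (rewrite Elive; apply (wf_nodup Hwf)).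
  assert (Hjb1 : In j (live s1) -> bin_of s1 j <> b1) by (rewrite Elive, Ebin; exact Hjb).
  assert (Hocc1 : occupancy s1 = occupancy s) by (unfold occupancy, items_in; rewrite Elive, Ebin; auto).
  set (s2 := assign s1 j b1).
  assert (Hocc2 : forall x, x <> b1 -> (In j (live s) -> bin_of s j <> x) ->
                   occupancy s2 x = occupancy s x).
  { intros x Hx Hjx. rewrite <- Hocc1. apply (occupancy_assign s1 j b1 x Hnd1 Hjb1); auto.
    rewrite Elive, Ebin; auto. }
  assert (Hocc2b : occupancy s2 b1 = S (occupancy s b1))
    by (rewrite <- Hocc1; apply (occupancy_assign s1 j b1 b1 Hnd1 Hjb1); auto).
  destruct (seal_if_full_frame s2 k b1) as (Elive' & Ebin' & Ecls' & Eclass' & Ecredit' & Enext' & Eocc').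
  destruct (seal_if_full_flags s2 k b1) as [Esealed' Eact''].
  exists (Nat.eqb (occupancy s2 b1) (2 ^ k)).
  rewrite Elive', Ebin', Ecls', Eclass', Ecredit', Enext', Eocc'.
  cbn [s2 assign live bin_of class_of credit bin_class next_bin sealed active].
  assert (Hlw : live_with s1 j = live_with s j) by (unfold live_with; rewrite Elive; auto).
  rewrite Hlw, Ebin, Ecls, Ecredit. repeat split; auto.
  - rewrite <- Epot. unfold potential. rewrite Enext', Ecredit'. reflexivity.
  - intros x. rewrite Esealed'. cbn. rewrite Esealed. reflexivity.
  - intros k'. rewrite Eact''. cbn.
    destruct (Nat.eqb_spec k' k) as [->|]; rewrite ?andb_true_r, ?andb_false_r;
      [destruct (Nat.eqb _ _); auto|auto].
  - intros H. apply Nat.eqb_eq; auto.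
  - intros H. apply Nat.eqb_neq in H. lia.
Qed.

Lemma insert_item_wf s j k s' b : wf I g Bc s ->
  (forall k', INR (capped_count I s (live_with s j) k') <= g * INR (2 ^ k')) ->
  class_of s j = k -> (j < length I)%nat -> isize I j <= / INR (2 ^ k) -> INR k <= Bc ->
  (In j (live s) -> idle s (bin_of s j)) -> insert_item s j k = (s', b) -> wf I g Bc s'.
Proof.
  intros Hwf Hcap Hk HjI Hjs HkB Hold Hins.
  destruct (insert_item_fields s j k s' b Hwf Hold Hins) as (full & Elive & Ebin & Ecls & Ecredit & _ &
    Hnext & Hb & Eclassb & Eclass & Esealed & Eact & Eocc & Hfull & Hnfull & _ & Hsb & Hor).
  destruct Hwf as [H1 H2 H3 H4 H5].
  assert (Hlw : forall i, In i (live_with s j) -> i = j \/ (In i (live s) /\ i <> j)).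
  { unfold live_with. intros i Hi. destruct (Nat.eq_dec i j); [auto|right].
    destruct (in_dec Nat.eq_dec j (live s)); [auto|destruct Hi; [congruence|auto]]. }
  constructor.
  - rewrite Elive. unfold live_with. destruct (in_dec Nat.eq_dec j (live s)); auto. constructor; auto.
  - intros i Hi. rewrite Elive in Hi. rewrite Ebin, Ecls.
    destruct (Hlw i Hi) as [->|[Hi' Hij]].
    + rewrite fupd_eq, Eclassb, Hk. repeat split; auto; lia.
    + rewrite fupd_neq by auto. destruct (H2 i Hi') as (? & ? & ? & ? & ?).
      rewrite Eclass by auto. repeat split; auto; lia.
  - intros k' x Hx. rewrite Eact in Hx. rewrite Esealed.
    destruct (Nat.eqb_spec k' k) as [->|Hk'].
    + destruct full; [discriminate|]. injection Hx as <-. rewrite Hsb. repeat split; auto.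
    + destruct (H3 k' x Hx) as (Hx1 & Hx2 & Hx3 & Hx4).
      assert (Hxb : x <> b).
      { intros ->. destruct Hor as [Hc|[-> _]]; [|lia].
        destruct (H3 k b Hc) as (_ & ? & _). congruence. }
      assert (Hjx : In j (live s) -> bin_of s j <> x).
      { intros Hj E. destruct (Hold Hj) as (_ & _ & Hna). rewrite E in Hna. exact (Hna k' Hx). }
      rewrite Eclass, Eocc, Hx4 by auto. rewrite (proj2 (Nat.eqb_neq x b) Hxb), andb_false_r.
      repeat split; auto; lia.
  - intros x Hx. rewrite Ecredit, Esealed.
    assert (Hxb : x <> b) by lia. rewrite (proj2 (Nat.eqb_neq x b) Hxb), andb_false_r. apply H4; lia.
  - intros k'. rewrite Elive. unfold capped_count, capped. rewrite Ecls. apply Hcap.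
Qed.

Lemma insert_item_idle s j k s' b x : wf I g Bc s -> (In j (live s) -> idle s (bin_of s j)) ->
  insert_item s j k = (s', b) -> idle s x ->
  idle s' x /\ b <> x /\ bin_class s' x = bin_class s x.
Proof.
  intros Hwf Hold Hins (Hx & Hsx & Hax).
  destruct (insert_item_fields s j k s' b Hwf Hold Hins) as (full & _ & _ & _ & _ & _ &
    Hnext & _ & _ & Eclass & Esealed & Eact & _ & _ & _ & _ & _ & Hor).
  assert (Hbx : b <> x) by (intros ->; destruct Hor as [Hc|[-> _]]; [exact (Hax k Hc)|lia]).
  split; [split; [lia|split]|split; [auto|apply Eclass; lia]].
  - rewrite Esealed, Hsx, (proj2 (Nat.eqb_neq x b) (not_eq_sym Hbx)), andb_false_r. reflexivity.
  - intros k' Hc. rewrite Eact in Hc. destruct (Nat.eqb k' k); [destruct full|]; congruence.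
Qed.

Lemma insert_item_sealed_or_active_but s j k s' b X : wf I g Bc s ->
  (In j (live s) -> idle s (bin_of s j)) -> insert_item s j k = (s', b) ->
  sealed_or_active_but s X -> sealed_or_active_but s' X.
Proof.
  intros Hwf Hold Hins HX i Hi HiX.
  destruct (insert_item_fields s j k s' b Hwf Hold Hins) as (full & Elive & Ebin & _ & _ & _ &
    Hnext & _ & Eclassb & Eclass & Esealed & Eact & _ & _ & _ & _ & _ & Hor).
  assert (Htarget : sealed s' b = true \/ active s' (bin_class s' b) = Some b).
  { rewrite Esealed, Eact, Eclassb, !Nat.eqb_refl, andb_true_r.
    destruct full; [left|right]; reflexivity. }
  rewrite Elive in Hi. rewrite Ebin in *. unfold fupd in *.
  destruct (Nat.eq_dec i j) as [->|Hij]; [exact Htarget|].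
  assert (Hi' : In i (live s)).
  { unfold live_with in Hi.
    destruct (in_dec Nat.eq_dec j (live s)); [auto|destruct Hi; [congruence|auto]]. }
  destruct (Nat.eq_dec (bin_of s i) b) as [E|Hne]; [rewrite E; exact Htarget|].
  destruct (wf_item Hwf i Hi') as (_ & Hlt & _).
  rewrite Esealed, Eact, Eclass by auto. rewrite (proj2 (Nat.eqb_neq _ _) Hne), andb_false_r.
  destruct (HX i Hi' HiX) as [Hs|Ha]; [left; auto|right].
  destruct (Nat.eqb_spec (bin_class s (bin_of s i)) k) as [Ek|]; [|exact Ha].
  rewrite Ek in Ha. destruct Hor as [Hc|[_ Hc]]; congruence.
Qed.

Lemma insert_item_dense s j k s' b : wf I g Bc s -> (In j (live s) -> idle s (bin_of s j)) ->
  insert_item s j k = (s', b) -> sealed_dense g s -> sealed_dense g s'.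
Proof.
  intros Hwf Hold Hins Hd x Hx.
  destruct (insert_item_fields s j k s' b Hwf Hold Hins) as (full & _ & _ & _ & Ecredit & _ &
    Hnext & _ & Eclassb & Eclass & Esealed & _ & Eocc & Hfull & _ & _ & Hsb & _).
  rewrite Esealed in Hx. rewrite Ecredit.
  destruct (Nat.eqb_spec x b) as [->|Hxb].
  - rewrite Hsb, orb_false_r, andb_true_r in Hx. rewrite Eclassb, (Hfull Hx).
    pose proof (pos_INR (2 ^ k)). split; [nra|lia].
  - rewrite andb_false_r in Hx. cbn in Hx.
    assert (Hxn : (x < next_bin s)%nat).
    { destruct (Nat.lt_ge_cases x (next_bin s)) as [|Hge]; [auto|].
      rewrite (proj2 (wf_unused Hwf x Hge)) in Hx. discriminate. }
    assert (Hjx : In j (live s) -> bin_of s j <> x).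
    { intros Hj E. destruct (Hold Hj) as (_ & Hns & _). congruence. }
    rewrite Eclass, Eocc by auto. apply Hd; auto.
Qed.

Lemma load_bound s c b k : wf I g Bc s -> represents s c ->
  (forall i, In i (live s) -> bin_of s i = b -> class_of s i = k) ->
  load I c b <= INR (occupancy s b) * / INR (2 ^ k).
Proof.
  intros Hwf [Hin Hout] Hk. pose proof (Rinv_0_lt_compat _ (INR_pow2_pos k)) as Hpos.
  unfold load. rewrite sumR_map, Rmult_comm. apply sumR_le_count; [apply seq_NoDup|lra|].
  intros i _.
  destruct (in_dec Nat.eq_dec i (live s)) as [Hi|Hi]; [rewrite (Hin i Hi)|rewrite (Hout i Hi)].
  - destruct (Nat.eq_dec (bin_of s i) b) as [E|E].
    + destruct (in_dec Nat.eq_dec i (items_in s b)) as [_|Hn].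
      * destruct (wf_item Hwf i Hi) as (_ & _ & _ & Hs & _). rewrite (Hk i Hi E) in Hs. exact Hs.
      * exfalso. apply Hn, filter_In. split; [auto|apply Nat.eqb_eq; auto].
    + destruct (in_dec _ _ _); lra.
  - destruct (in_dec _ _ _); lra.
Qed.

Lemma insert_item_fits s c j k s' b : wf I g Bc s -> represents s c ->
  (In j (live s) -> idle s (bin_of s j)) -> insert_item s j k = (s', b) ->
  isize I j <= / INR (2 ^ k) -> load I c b + isize I j <= 1.
Proof.
  intros Hwf Hrep Hold Hins Hjs.
  destruct (insert_item_fields s j k s' b Hwf Hold Hins) as (_ & _ & _ & _ & _ & _ &
    _ & _ & _ & _ & _ & _ & _ & _ & _ & Hocc & _ & Hor).
  apply dyadic_fit with (occupancy s b) k; auto. apply load_bound; auto.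
  intros i Hi E. destruct (wf_item Hwf i Hi) as (_ & Hlt & Hcls & _).
  rewrite <- Hcls, E. destruct Hor as [Hc|[-> _]]; [|lia].
  apply (wf_active Hwf k b Hc).
Qed.

Lemma insert_item_move s c j k s' b : wf I g Bc s -> represents s c -> In j (live s) ->
  idle s (bin_of s j) -> class_of s j = k -> insert_item s j k = (s', b) ->
  apply_move I c (j, b) = Some (upd c j (Some b)) /\ represents s' (upd c j (Some b)).
Proof.
  intros Hwf Hrep Hj Hidle Hk Hins.
  destruct (insert_item_fields s j k s' b Hwf (fun _ => Hidle) Hins) as (_ & Elive & Ebin & _).
  split; [|exact (represents_assign s s' c j b Elive Ebin Hrep)].
  unfold apply_move. rewrite (proj1 Hrep j Hj).
  destruct (Rle_dec (load I c b + size (itm I j)) 1) as [|Hn]; [reflexivity|exfalso; apply Hn].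
  apply (insert_item_fits s c j k s' b Hwf Hrep (fun _ => Hidle) Hins).
  destruct (wf_item Hwf j Hj) as (_ & _ & _ & Hs & _). rewrite <- Hk. exact Hs.
Qed.

Lemma reinsert_spec l : forall s c k b0 s' ms, wf I g Bc s -> represents s c ->
  sealed_or_active_but s b0 -> sealed_dense g s -> NoDup l ->
  (forall j, In j l -> In j (live s) /\ bin_of s j = b0) -> idle s b0 -> bin_class s b0 = k ->
  reinsert s l k = (s', ms) ->
  wf I g Bc s' /\ (exists c', apply_moves I c ms = Some c' /\ represents s' c') /\
  sealed_or_active_but s' b0 /\ sealed_dense g s' /\ live s' = live s /\ potential s' = potential s /\
  length ms = length l /\ (forall i, In i l -> bin_of s' i <> b0) /\
  (forall i, ~ In i l -> bin_of s' i = bin_of s i) /\ idle s' b0 /\ bin_class s' b0 = bin_class s b0.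
Proof.
  induction l as [|j l IH]; intros s c k b0 s' ms Hwf Hrep Hsoa Hd Hnd Hl Hidle Hk Hre.
  - injection Hre as <- <-. split; [exact Hwf|]. split; [exists c; auto|].
    do 2 (split; [assumption|]). do 3 (split; [reflexivity|]).
    split; [intros i []|]. split; [reflexivity|]. split; [exact Hidle|reflexivity].
  - cbn in Hre. destruct (insert_item s j k) as [s1 b] eqn:Ei.
    destruct (reinsert s1 l k) as [s2 ms2] eqn:Er. injection Hre as <- <-.
    apply NoDup_cons_iff in Hnd as [Hjl Hnd].
    destruct (Hl j (or_introl eq_refl)) as [Hj Hjb0].
    destruct (wf_item Hwf j Hj) as (HjI & _ & Hclsj & Hjs & HjB).
    rewrite Hjb0, Hk in Hclsj. rewrite <- Hclsj in Hjs, HjB.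
    assert (Hold : In j (live s) -> idle s (bin_of s j)) by (rewrite Hjb0; auto).
    assert (Hlw : live_with s j = live s)
      by (unfold live_with; destruct (in_dec Nat.eq_dec j (live s)); tauto).
    assert (Hcap : forall k', INR (capped_count I s (live_with s j) k') <= g * INR (2 ^ k'))
      by (rewrite Hlw; apply (wf_capped Hwf)).
    destruct (insert_item_fields s j k s1 b Hwf Hold Ei) as (_ & Elive & Ebin & _ & _ & Epot & _).
    rewrite Hlw in Elive.
    destruct (insert_item_move s c j k s1 b Hwf Hrep Hj (Hold Hj) (eq_sym Hclsj) Ei) as [Hmove Hrep1].
    destruct (insert_item_idle s j k s1 b b0 Hwf Hold Ei Hidle) as (Hidle1 & Hbb0 & Hk1).
    assert (Hl1 : forall j', In j' l -> In j' (live s1) /\ bin_of s1 j' = b0).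
    { intros j' Hj'. destruct (Hl j' (or_intror Hj')) as [? ?]. rewrite Elive, Ebin, fupd_neq; auto.
      intros ->; contradiction. }
    destruct (IH s1 (upd c j (Some b)) k b0 s2 ms2
      (insert_item_wf s j k s1 b Hwf Hcap (eq_sym Hclsj) HjI Hjs HjB Hold Ei) Hrep1
      (insert_item_sealed_or_active_but s j k s1 b b0 Hwf Hold Ei Hsoa)
      (insert_item_dense s j k s1 b Hwf Hold Ei Hd) Hnd Hl1 Hidle1 (eq_trans Hk1 Hk) Er) as
      (Hwf2 & [c2 [Hmoves Hrep2]] & Hsoa2 & Hd2 & Elive2 & Epot2 & Hlen & Hmoved & Hstay & Hidle2 & Hk2).
    split; [exact Hwf2|]. split.
    + exists c2. rewrite apply_moves_cons, Hmove. auto.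
    + do 2 (split; [assumption|]). split; [congruence|]. split; [congruence|].
      split; [cbn; rewrite Hlen; reflexivity|]. split; [|split; [|split; [exact Hidle2|congruence]]].
      * intros i [<-|Hi]; [|auto]. rewrite (Hstay j Hjl), Ebin, fupd_eq. auto.
      * intros i Hi. rewrite (Hstay i (fun H => Hi (or_intror H))), Ebin, fupd_neq; [auto|].
        intros ->. apply Hi. left; auto.
Qed.

Definition sealed_dense_but (s : state) (X : nat) : Prop :=
  forall b, b <> X -> sealed s b = true ->
    g * INR (2 ^ bin_class s b) <= INR (occupancy s b) /\
    (2 ^ bin_class s b <= occupancy s b + credit s b)%nat.

Lemma forget_spec s c i : good I g Bc s c -> In i (live s) ->
  wf I g Bc (forget s i) /\ represents (forget s i) (upd c i None) /\
  sealed_or_active (forget s i) /\ (forall j, In j (live (forget s i)) <-> In j (live s) /\ j <> i).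
Proof.
  intros [[H1 H2 H3 H4 H5] [Hin Hout] Hsoa _] Hi.
  assert (Hlive : forall j, In j (live (forget s i)) <-> In j (live s) /\ j <> i).
  { intros j. cbn. rewrite filter_In. destruct (Nat.eqb_spec j i); cbn; intuition congruence. }
  assert (Hocc : forall x, (occupancy (forget s i) x <= occupancy s x)%nat).
  { intros x. pose proof (occupancy_forget s i x H1 Hi). lia. }
  split; [|split; [|split]]; auto.
  - constructor.
    + apply NoDup_filter; auto.
    + intros j Hj. apply H2. apply (Hlive j) in Hj. tauto.
    + intros k x Hx. destruct (H3 k x Hx) as (? & ? & ? & ?). specialize (Hocc x).
      repeat split; auto; lia.
    + exact H4.
    + intros k. eapply Rle_trans; [|apply (H5 k)]. apply le_INR. unfold capped_count. cbn.
      rewrite filter_filter. apply filter_length_mono. intros x Hx. apply andb_prop in Hx. tauto.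
  - split; intros j Hj; unfold upd; destruct (Nat.eq_dec j i) as [->|Hji]; auto.
    + apply (Hlive i) in Hj. tauto.
    + apply Hin. apply (Hlive j) in Hj. tauto.
    + apply Hout. intros Hj'. apply Hj, Hlive. auto.
  - intros j Hj. apply Hsoa. apply (Hlive j) in Hj. tauto.
Qed.

Lemma forget_dense s i : wf I g Bc s -> sealed_dense g s -> In i (live s) ->
  sealed_dense_but (forget s i) (bin_of s i) /\
  S (occupancy (forget s i) (bin_of s i)) = occupancy s (bin_of s i).
Proof.
  intros Hwf Hd Hi. pose proof (fun x => occupancy_forget s i x (wf_nodup Hwf) Hi) as Hocc.
  split.
  - intros x Hx Hs. specialize (Hocc x). destruct (Nat.eqb_spec (bin_of s i) x); [congruence|].
    replace (occupancy (forget s i) x) with (occupancy s x) by lia. apply Hd, Hs.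
  - specialize (Hocc (bin_of s i)). rewrite Nat.eqb_refl in Hocc. lia.
Qed.

Lemma charge_spec s b : wf I g Bc s -> (b < next_bin s)%nat -> sealed_dense_but s b ->
  wf I g Bc (charge s b) /\ potential (charge s b) = potential s + 1 /\
  credit (charge s b) b = S (credit s b) /\ sealed_dense_but (charge s b) b.
Proof.
  intros [H1 H2 H3 H4 H5] Hb Hd. split; [|split; [apply potential_charge, Hb|split; [apply fupd_eq|]]].
  - constructor; auto. intros x Hx. cbn in *. rewrite fupd_neq by lia. auto.
  - intros x Hx Hs. unfold charge; cbn [credit]. rewrite fupd_neq by auto. apply Hd; auto.
Qed.

Lemma wf_unseal s b : wf I g Bc s -> (b < next_bin s)%nat -> (forall k, active s k <> Some b) ->
  wf I g Bc (unseal s b).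
Proof.
  intros [H1 H2 H3 H4 H5] Hb Hna. constructor; auto; cbn.
  - intros k x Hx. destruct (H3 k x Hx) as (? & ? & ? & ?). rewrite fupd_neq; [auto|].
    intros ->. exact (Hna k Hx).
  - intros x Hx. rewrite !fupd_neq by lia. auto.
Qed.

Lemma rebuild_spec t c b s' ms : wf I g Bc t -> represents t c ->
  sealed_or_active_but t b -> sealed_dense_but t b -> (b < next_bin t)%nat ->
  (forall k, active t k <> Some b) ->
  reinsert (unseal t b) (items_in t b) (bin_class t b) = (s', ms) ->
  exists c', apply_moves I c ms = Some c' /\ good I g Bc s' c' /\ live s' = live t /\
  potential s' = potential t - INR (credit t b) /\ length ms = occupancy t b.
Proof.
  intros Hwf Hrep Hsoa Hd Hb Hna Hre. set (t' := unseal t b) in Hre.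
  assert (Hwf' : wf I g Bc t') by (apply wf_unseal; auto).
  assert (Hidle : idle t' b) by (split; [auto|split; [apply fupd_eq|auto]]).
  assert (Hsoa' : sealed_or_active_but t' b).
  { intros j Hj Hjb. unfold t', unseal. cbn [sealed bin_of bin_class active].
    rewrite fupd_neq by auto. apply Hsoa; auto. }
  assert (Hd' : sealed_dense g t').
  { intros x Hx. unfold t', unseal in Hx |- *. cbn [sealed credit bin_class] in Hx |- *.
    destruct (Nat.eq_dec x b) as [->|Hxb]; [rewrite fupd_eq in Hx; discriminate|].
    rewrite fupd_neq in Hx by auto. rewrite fupd_neq by auto. apply Hd; auto. }
  assert (Hl : forall j, In j (items_in t b) -> In j (live t') /\ bin_of t' j = b).
  { intros j Hj. apply filter_In in Hj as [Hj E]. apply Nat.eqb_eq in E. auto. }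
  destruct (reinsert_spec (items_in t b) t' c (bin_class t b) b s' ms Hwf' Hrep Hsoa' Hd'
    (NoDup_filter _ (wf_nodup Hwf)) Hl Hidle eq_refl Hre) as
    (Hwf2 & [c' [Hmoves Hrep2]] & Hsoa2 & Hd2 & Elive & Epot & Hlen & Hmoved & Hstay & _).
  exists c'. split; [auto|]. split; [constructor; auto|].
  - intros j Hj. apply Hsoa2; auto. rewrite Elive in Hj.
    destruct (in_dec Nat.eq_dec j (items_in t b)) as [Hin|Hin]; [apply Hmoved; auto|].
    rewrite Hstay by auto. intros E. apply Hin, filter_In. split; [auto|apply Nat.eqb_eq; auto].
  - split; [exact Elive|]. split; [|exact Hlen].
    rewrite Epot. apply potential_unseal. exact Hb.
Qed.

Lemma depart_spec s c i s' ms : good I g Bc s c -> depart g s i = (s', ms) ->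
  exists c', apply_moves I (upd c i None) ms = Some c' /\ good I g Bc s' c' /\
  (forall j, In j (live s') <-> In j (live s) /\ j <> i) /\
  INR (length ms) + g / (1 - g) * potential s' <= g / (1 - g) * potential s + g / (1 - g).
Proof.
  intros Hgood Hdep. assert (Hr : 0 < g / (1 - g)) by (apply Rdiv_lt_0_compat; lra).
  unfold depart in Hdep. destruct (in_dec Nat.eq_dec i (live s)) as [Hi|Hi].
  2:{ injection Hdep as <- <-. exists (upd c i None). split; [reflexivity|].
      destruct Hgood as [Hwf [Hin Hout] Hsoa Hd]. split; [constructor; auto|split; [|cbn; lra]].
      - split; intros j Hj; unfold upd; destruct (Nat.eq_dec j i) as [->|]; auto; contradiction.
      - intros j. split; [intros Hj; split; [auto|intros ->; contradiction]|tauto]. }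
  destruct (forget_spec s c i Hgood Hi) as (Hwf1 & Hrep1 & Hsoa1 & Hlive1).
  destruct Hgood as [Hwf Hrep Hsoa Hd].
  destruct (forget_dense s i Hwf Hd Hi) as [Hd1 Hocc_b].
  set (b := bin_of s i) in *. set (s1 := forget s i) in *.
  assert (Hb : (b < next_bin s)%nat) by apply (wf_item Hwf i Hi).
  destruct (sealed s b) eqn:Hsb.
  2:{ injection Hdep as <- <-. exists (upd c i None). split; [reflexivity|].
      split; [constructor; auto|split; [auto|]].
      - intros x Hx. apply Hd1; auto. intros ->. cbn in Hx. congruence.
      - change (potential s1) with (potential s). cbn [length INR]. lra. }
  destruct (charge_spec s1 b Hwf1 Hb Hd1) as (Hwf2 & Hpot2 & Ec2 & Hd2).
  set (s2 := charge s1 b) in *.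
  change (potential s1) with (potential s) in Hpot2. change (credit s1 b) with (credit s b) in Ec2.
  assert (Hcredit : (2 ^ bin_class s b <= occupancy s2 b + credit s2 b)%nat).
  { destruct (Hd b Hsb) as [_ H]. rewrite Ec2. change (occupancy s2 b) with (occupancy s1 b). lia. }
  destruct (Rlt_dec _ _) as [Hlow|Hhigh].
  - assert (Hna : forall k, active s2 k <> Some b).
    { intros k Ha. destruct (wf_active Hwf k b Ha) as (_ & _ & _ & E). congruence. }
    destruct (rebuild_spec s2 (upd c i None) b s' ms Hwf2 Hrep1
      (fun j Hj _ => Hsoa1 j Hj) Hd2 Hb Hna Hdep) as (c' & Hmoves & Hgood' & Elive & Epot & Hlen).
    exists c'. split; [auto|]. split; [auto|]. split; [rewrite Elive; exact Hlive1|].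
    rewrite Ec2 in Hcredit, Epot. rewrite Hlen, Epot, Hpot2.
    pose proof (rebuild_cost g (occupancy s2 b) (credit s b) (bin_class s b) Hg Hlow Hcredit).
    rewrite S_INR. nra.
  - injection Hdep as <- <-. exists (upd c i None). split; [reflexivity|].
    split; [constructor; auto|split; [auto|rewrite Hpot2; cbn [length INR]; lra]].
    intros x Hx. destruct (Nat.eq_dec x b) as [->|Hxb]; [|apply Hd2; auto].
    change (bin_class s2 b) with (bin_class s b). split; [lra|exact Hcredit].
Qed.

Lemma classify_wf s i k : wf I g Bc s -> ~ In i (live s) -> wf I g Bc (classify s i k).
Proof.
  intros [H1 H2 H3 H4 H5] Hi.
  assert (Hcls : forall j, In j (live s) -> class_of (classify s i k) j = class_of s j)
    by (intros j Hj; apply fupd_neq; intros ->; contradiction).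
  constructor; auto.
  - intros j Hj. rewrite Hcls by auto. apply H2; auto.
  - intros k'. eapply Rle_trans; [|apply (H5 k')]. right. f_equal. unfold capped_count, capped.
    f_equal. apply filter_ext_in. intros j Hj. rewrite Hcls by auto. reflexivity.
Qed.

Lemma arrive_spec s c i s' b : good I g Bc s c -> ~ In i (live s) ->
  (i < length I)%nat -> 0 <= isize I i <= 1 -> INR (class_cap g (S (length (live s)))) <= Bc ->
  arrive g s i (isize I i) = (s', b) ->
  load I c b + isize I i <= 1 /\ good I g Bc s' (upd c i (Some b)) /\
  live s' = i :: live s /\ potential s' = potential s.
Proof.
  intros [Hwf Hrep Hsoa Hd] Hi HiI Hsz HB Harr. unfold arrive in Harr.
  set (cap := class_cap g (S (length (live s)))) in *.
  set (k := size_class (isize I i) cap) in *. set (s0 := classify s i k) in *.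
  destruct (size_class_spec (isize I i) cap Hsz) as (Hkcap & Hfit & Hcapped).
  fold k in Hkcap, Hfit, Hcapped.
  destruct (class_cap_spec g (S (length (live s))) Hg ltac:(lia)) as [Hroom _]. fold cap in Hroom.
  assert (Hwf0 : wf I g Bc s0) by (apply classify_wf; auto).
  assert (Hold : In i (live s0) -> idle s0 (bin_of s0 i)) by (intros; contradiction).
  assert (Hlw : live_with s0 i = i :: live s)
    by (unfold live_with; change (live s0) with (live s); destruct (in_dec Nat.eq_dec i (live s)); tauto).
  assert (Hcap : forall k', INR (capped_count I s0 (live_with s0 i) k') <= g * INR (2 ^ k')).
  { intros k'. rewrite Hlw, capped_count_cons.
    pose proof (wf_capped Hwf0 k') as Hold'. cbn [live s0 classify] in Hold'.
    unfold capped at 1. cbn [class_of s0 classify]. rewrite fupd_eq.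
    destruct (Nat.eqb_spec k k') as [<-|]; cbn [andb]; [|rewrite Nat.add_0_l; exact Hold'].
    destruct (Rle_dec _ _) as [Hc|]; cbn [andb]; [|rewrite Nat.add_0_l; exact Hold'].
    rewrite (Hcapped Hc) in *. eapply Rle_trans; [|exact Hroom]. apply le_INR.
    unfold capped_count.
    pose proof (filter_length_le (fun j => andb (Nat.eqb (class_of s0 j) cap) (capped I s0 j)) (live s)).
    cbn [length]. lia. }
  destruct (insert_item_fields s0 i k s' b Hwf0 Hold Harr) as (_ & Elive & Ebin & _ & _ & Epot & _).
  assert (Hwf' : wf I g Bc s')
    by (apply (insert_item_wf s0 i k s' b Hwf0 Hcap (fupd_eq _ _ _) HiI Hfit
                 (Rle_trans _ _ _ (le_INR _ _ Hkcap) HB) Hold Harr)).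
  split; [exact (insert_item_fits s0 c i k s' b Hwf0 Hrep Hold Harr Hfit)|].
  split; [constructor; auto|split; [rewrite Elive; exact Hlw|exact Epot]].
  - exact (represents_assign s0 s' c i b Elive Ebin Hrep).
  - intros j Hj. apply (insert_item_sealed_or_active_but s0 i k s' b (next_bin s') Hwf0 Hold Harr).
    + intros j' Hj' _. apply Hsoa. exact Hj'.
    + exact Hj.
    + pose proof (wf_item Hwf' j Hj). lia.
  - exact (insert_item_dense s0 i k s' b Hwf0 Hold Harr Hd).
Qed.

End Invariants.

(** * Runs of the algorithm *)

Lemma run_aux_snoc I A p e : forall h c,
  run_aux I A h c (p ++ [e]) =
  match run_aux I A h c p with
  | Some c' => process I A (h ++ map (obs_of I) p) c' e
  | None => None
  end.
Proof.
  induction p as [|a p IH]; intros h c; cbn.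
  - rewrite app_nil_r. destruct (process I A h c e); reflexivity.
  - destruct (process I A h c a) as [c1|]; [|reflexivity]. rewrite IH, <- app_assoc. reflexivity.
Qed.

Lemma run_snoc I A p e : run I A (p ++ [e]) =
  match run I A p with Some c' => process I A (map (obs_of I) p) c' e | None => None end.
Proof. unfold run. rewrite run_aux_snoc. reflexivity. Qed.

Lemma migrations_snoc I A p e : migrations I A (p ++ [e]) =
  (migrations I A p + length (moves (A (map (obs_of I) (p ++ [e])))))%nat.
Proof.
  unfold migrations. rewrite length_app, Nat.add_comm. cbn [length Nat.add].
  rewrite seq_S, map_app. change (fold_right Nat.add 0%nat) with list_sum. rewrite list_sum_app.
  f_equal.
  - f_equal. apply map_ext_in. intros k Hk. apply in_seq in Hk. rewrite firstn_app.
    replace (S k - length p)%nat with 0%nat by lia. rewrite app_nil_r. reflexivity.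
  - cbn [map list_sum fold_right]. rewrite firstn_all2 by (rewrite length_app; cbn; lia). lia.
Qed.

Lemma ev_le_time I x y : ev_le I x y -> ev_time I x <= ev_time I y.
Proof. intros [H|[H _]]; lra. Qed.

Lemma all_events_In I e : In e (all_events I) <->
  match e with Arr i | Dep i => (i < length I)%nat end.
Proof.
  unfold all_events. rewrite in_app_iff, !in_map_iff.
  destruct e as [i|i]; split; try (intros H; (left + right); exists i; split; [auto|apply in_seq; lia]);
    intros [[j [E Hj]]|[j [E Hj]]]; try discriminate; injection E as ->; apply in_seq in Hj; lia.
Qed.

Lemma NoDup_all_events I : NoDup (all_events I).
Proof.
  unfold all_events. apply NoDup_app.
  - apply FinFun.Injective_map_NoDup; [intros a b E; injection E; auto|apply seq_NoDup].
  - apply FinFun.Injective_map_NoDup; [intros a b E; injection E; auto|apply seq_NoDup].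
  - intros a Ha Hb. apply in_map_iff in Ha as [? [<- _]]. apply in_map_iff in Hb as [? [E _]].
    discriminate.
Qed.

Lemma count_departures I es : Permutation es (all_events I) -> length (filter is_dep es) = length I.
Proof.
  intros H. rewrite (perm_filter_length _ _ _ H). unfold all_events.
  rewrite filter_app, length_app. rewrite <- (length_seq (length I) 0) at 3.
  induction (seq 0 (length I)) as [|a l IH]; cbn; lia.
Qed.

Lemma valid_nth I i : Forall valid_item I -> (i < length I)%nat -> valid_item (itm I i).
Proof. intros H Hi. rewrite Forall_forall in H. apply H, nth_In, Hi. Qed.

Lemma present_In I t j : In j (present_items I t) <->
  (j < length I)%nat /\ arr (itm I j) <= t /\ t < arr (itm I j) + dur (itm I j).
Proof.
  unfold present_items, present_b. rewrite filter_In, in_seq.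
  destruct (Rle_dec _ _); [destruct (Rlt_dec _ _)|]; intuition (try discriminate; try lia; try lra).
Qed.

Lemma prefix_time I es t : StronglySorted (ev_le I) es ->
  (forall e, In e (firstn (n_events_upto I es t) es) -> ev_time I e <= t) /\
  (forall e, In e (skipn (n_events_upto I es t) es) -> t < ev_time I e).
Proof.
  induction 1 as [|a l Hs IH Hf]; [cbn; split; intros; contradiction|].
  rewrite Forall_forall in Hf. unfold n_events_upto in *. cbn [filter].
  destruct (Rle_dec (ev_time I a) t) as [Ht|Ht].
  - cbn [length firstn skipn]. destruct IH as [IH1 IH2]. split; [intros e [<-|He]|]; auto.
  - assert (Hz : filter (fun e => if Rle_dec (ev_time I e) t then true else false) l = []).
    { rewrite (filter_ext_in _ (fun _ => false)), filter_false; [reflexivity|].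
      intros e He. destruct (Rle_dec (ev_time I e) t); [|reflexivity].
      pose proof (ev_le_time I a e (Hf e He)). lra. }
    rewrite Hz. cbn. split; [intros; contradiction|].
    intros e [<-|He]; [lra|]. pose proof (ev_le_time I a e (Hf e He)). lra.
Qed.

Lemma pending_present I p q t j : Permutation (p ++ q) (all_events I) -> (j < length I)%nat ->
  In (Arr j) p -> ~ In (Dep j) p -> (forall e, In e p -> ev_time I e <= t) ->
  (forall j', In (Dep j') q -> t < ev_time I (Dep j')) -> In j (present_items I t).
Proof.
  intros Hperm Hj HA HD Hp Hq. apply present_In. split; [auto|split].
  - exact (Hp _ HA).
  - assert (Hin : In (Dep j) (p ++ q))
      by (apply Permutation_in with (all_events I);
          [apply Permutation_sym; auto|apply all_events_In; auto]).
    apply in_app_or in Hin as [Hin|Hin]; [contradiction|exact (Hq j Hin)].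
Qed.

Definition run_invariant (I : instance) (g Bc : R) (p : list event) (c : config) : Prop :=
  let s := state_of g (map (obs_of I) p) in
  good I g Bc s c /\ (forall j, In j (live s) -> In (Arr j) p /\ ~ In (Dep j) p) /\
  INR (migrations I (dbp_alg g) p) + g / (1 - g) * potential s <=
    g / (1 - g) * INR (length (filter is_dep p)).

Section Runs.
Variables (I : instance) (g Bc : R).
Hypothesis Hg : 0 < g < 1.
Lemma run_invariant_nil : run_invariant I g Bc [] (fun _ => None).
Proof.
  split; [|split; [intros j []|]].
  - constructor; [apply wf_init; lra|split; cbn; auto; tauto|intros i []|intros b Hb; discriminate].
  - unfold migrations, potential. cbn. lra.
Qed.

Lemma run_invariant_arrival p c i : Forall valid_item I -> (i < length I)%nat ->
  ~ In (Arr i) p -> ~ In (Dep i) p ->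
  INR (class_cap g (S (length (live (state_of g (map (obs_of I) p)))))) <= Bc ->
  run I (dbp_alg g) p = Some c -> run_invariant I g Bc p c ->
  exists c', run I (dbp_alg g) (p ++ [Arr i]) = Some c' /\ run_invariant I g Bc (p ++ [Arr i]) c'.
Proof.
  intros HV HiI HA HD HB Hrun (Hgood & Hpend & Hpot).
  set (s := state_of g (map (obs_of I) p)) in *.
  assert (Hi : ~ In i (live s)) by (intros H; apply HA, (Hpend i H)).
  destruct (valid_nth I i HV HiI) as (_ & Hsz & _).
  destruct (arrive g s i (isize I i)) as [s' b] eqn:Ea.
  destruct (arrive_spec I g Bc Hg s c i s' b Hgood Hi HiI Hsz HB Ea) as (Hfit & Hgood' & Elive & Epot).
  assert (Hs' : state_of g (map (obs_of I) (p ++ [Arr i])) = s').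
  { rewrite map_app; cbn [map]; rewrite state_of_snoc. fold s. cbn.
    unfold isize in Ea. rewrite Ea. reflexivity. }
  assert (Hact : dbp_alg g (map (obs_of I) p ++ [obs_of I (Arr i)]) = mkAction b []).
  { rewrite dbp_alg_snoc. fold s. cbn. unfold isize in Ea. rewrite Ea. reflexivity. }
  exists (upd c i (Some b)). split.
  - rewrite run_snoc, Hrun. unfold process. rewrite Hact. cbn [place moves].
    destruct (Rle_dec _ _) as [|Hn]; [reflexivity|contradiction].
  - unfold run_invariant. rewrite Hs'. split; [exact Hgood'|split].
    + intros j Hj. rewrite Elive in Hj. rewrite !in_app_iff. cbn.
      destruct Hj as [<-|Hj]; [split; [auto|intuition congruence]|].
      destruct (Hpend j Hj). intuition congruence.
    + rewrite migrations_snoc, map_app; cbn [map]; rewrite Hact, Epot, filter_app. cbn.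
      rewrite app_nil_r, Nat.add_0_r. exact Hpot.
Qed.

Lemma run_invariant_departure p c i : run I (dbp_alg g) p = Some c -> run_invariant I g Bc p c ->
  exists c', run I (dbp_alg g) (p ++ [Dep i]) = Some c' /\ run_invariant I g Bc (p ++ [Dep i]) c'.
Proof.
  intros Hrun (Hgood & Hpend & Hpot).
  set (s := state_of g (map (obs_of I) p)) in *.
  destruct (depart g s i) as [s' ms] eqn:Ed.
  destruct (depart_spec I g Bc Hg s c i s' ms Hgood Ed) as (c' & Hmoves & Hgood' & Hlive & Hcost).
  assert (Hs' : state_of g (map (obs_of I) (p ++ [Dep i])) = s').
  { rewrite map_app; cbn [map]; rewrite state_of_snoc. fold s. cbn. rewrite Ed. reflexivity. }
  assert (Hact : dbp_alg g (map (obs_of I) p ++ [obs_of I (Dep i)]) = mkAction O ms).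
  { rewrite dbp_alg_snoc. fold s. cbn. rewrite Ed. reflexivity. }
  exists c'. split.
  - rewrite run_snoc, Hrun. unfold process. rewrite Hact. exact Hmoves.
  - unfold run_invariant. rewrite Hs'. split; [exact Hgood'|split].
    + intros j Hj. apply Hlive in Hj as [Hj Hji]. destruct (Hpend j Hj) as [HA HD].
      rewrite !in_app_iff. cbn. intuition congruence.
    + rewrite migrations_snoc, map_app; cbn [map]; rewrite Hact, filter_app, length_app, plus_INR.
      cbn [moves filter is_dep length].
      rewrite plus_INR in *. cbn [INR]. lra.
Qed.

End Runs.

Lemma arrival_room I g Bc p q i c rho : Forall valid_item I -> (i < length I)%nat ->
  Permutation (p ++ Arr i :: q) (all_events I) -> (forall x, In x p -> ev_le I x (Arr i)) ->
  (forall y, In y q -> ev_le I (Arr i) y) -> run_invariant I g Bc p c ->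
  ~ In (Arr i) p -> (forall t, (n_present I t <= rho)%nat) ->
  (S (length (live (state_of g (map (obs_of I) p)))) <= rho)%nat.
Proof.
  intros HV HiI Hperm Hbefore Hafter (Hgood & Hpend & _) HA Hrho.
  set (s := state_of g (map (obs_of I) p)) in *. set (t := arr (itm I i)).
  destruct (valid_nth I i HV HiI) as (_ & _ & Hdur).
  eapply Nat.le_trans; [|apply (Hrho t)]. unfold n_present.
  change (S (length (live s))) with (length (i :: live s)).
  apply NoDup_incl_length.
  { constructor; [intros H; apply HA, (Hpend i H)|apply (wf_nodup (good_wf Hgood))]. }
  intros j [<-|Hj]; [apply present_In; unfold t; repeat split; auto; lra|].
  destruct (Hpend j Hj) as [HAj HDj].
  apply (pending_present I p (Arr i :: q) t j Hperm); auto.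
  - apply (wf_item (good_wf Hgood) j Hj).
  - intros e He. exact (ev_le_time I e (Arr i) (Hbefore e He)).
  - intros j' [E|Hj']; [discriminate|].
    destruct (Hafter _ Hj') as [H|(_ & [H|H])]; [exact H|discriminate..].
Qed.

Lemma run_invariant_prefix I g rho es : 0 < g < 1 -> Forall valid_item I -> valid_order I es ->
  (forall t, (n_present I t <= rho)%nat) ->
  forall p q, p ++ q = es ->
  exists c, run I (dbp_alg g) p = Some c /\ run_invariant I g (class_bound g rho) p c.
Proof.
  intros Hg HV [Hperm Hsort] Hrho p. induction p as [|e p IH] using rev_ind; intros q Hpq.
  - exists (fun _ => None). split; [reflexivity|apply run_invariant_nil; auto].
  - rewrite <- app_assoc in Hpq. cbn in Hpq. destruct (IH (e :: q) Hpq) as (c & Hrun & Hinv).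
    subst es. destruct e as [i|i]; [|apply (run_invariant_departure I g _ Hg p c); auto].
    assert (HiI : (i < length I)%nat).
    { apply (all_events_In I (Arr i)). apply Permutation_in with (p ++ Arr i :: q); auto.
      apply in_or_app; right; left; auto. }
    assert (HA : ~ In (Arr i) p).
    { intros H. apply (NoDup_remove_2 p q (Arr i)); [|apply in_or_app; left; exact H].
      apply Permutation_NoDup with (all_events I); [apply Permutation_sym; auto|apply NoDup_all_events]. }
    assert (Hbefore : forall x, In x p -> ev_le I x (Arr i))
      by (intros x Hx; apply (StronglySorted_app_inv_rel _ p (Arr i :: q)); auto; left; auto).
    assert (Hafter : forall y, In y q -> ev_le I (Arr i) y).
    { apply StronglySorted_app_r, StronglySorted_inv in Hsort as [_ Hf].
      apply Forall_forall. exact Hf. }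
    apply (run_invariant_arrival I g _ Hg p c); auto.
    + intros HD. destruct (valid_nth I i HV HiI) as (_ & _ & Hdur).
      pose proof (ev_le_time I _ _ (Hbefore _ HD)). cbn in *. lra.
    + apply class_cap_le_bound; auto. split; [lia|].
      apply (arrival_room I g _ p q i c rho HV HiI Hperm Hbefore Hafter Hinv HA Hrho).
Qed.

(** * Counting open bins *)

Definition used_bins (I : instance) (c : config) : list nat :=
  nodup Nat.eq_dec (flat_map (fun i => match c i with Some b => [b] | None => [] end) (seq 0 (length I))).

Lemma used_bins_live I s c b : represents s c -> In b (used_bins I c) ->
  exists i, In i (live s) /\ bin_of s i = b.
Proof.
  intros [Hin Hout] Hb. apply nodup_In, in_flat_map in Hb as [i [_ Hb]].
  destruct (in_dec Nat.eq_dec i (live s)) as [Hi|Hi];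
    [rewrite (Hin i Hi) in Hb|rewrite (Hout i Hi) in Hb].
  - destruct Hb as [<-|[]]. eauto.
  - destruct Hb.
Qed.

Section BinCount.
Variables (I : instance) (g Bc : R) (s : state) (c : config) (N : nat).
Hypothesis Hg : 0 < g < 1.
Hypothesis Hgood : good I g Bc s c.
Hypothesis HN : forall i, In i (live s) -> (class_of s i < N)%nat.
Lemma unsealed_bins_le :
  (length (filter (fun b => negb (sealed s b)) (used_bins I c)) <= N)%nat.
Proof.
  destruct Hgood as [Hwf Hrep Hsoa _].
  set (Lu := filter (fun b => negb (sealed s b)) (used_bins I c)).
  assert (HLu : forall b, In b Lu -> active s (bin_class s b) = Some b /\ (bin_class s b < N)%nat).
  { intros b Hb. apply filter_In in Hb as [Hb Hs].
    destruct (used_bins_live I s c b Hrep Hb) as [i [Hi <-]].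
    destruct (wf_item Hwf i Hi) as (_ & _ & Hcls & _). rewrite Hcls. specialize (HN i Hi).
    destruct (Hsoa i Hi) as [E|E]; [rewrite E in Hs; discriminate|rewrite Hcls in E; auto]. }
  rewrite <- (length_map (bin_class s)), <- (length_seq N 0). apply NoDup_incl_length.
  - apply NoDup_map_inj_on; [apply NoDup_filter, NoDup_nodup|].
    intros x y Hx Hy E. destruct (HLu x Hx) as [Ex _]. destruct (HLu y Hy) as [Ey _]. congruence.
  - intros k Hk. apply in_map_iff in Hk as [b [<- Hb]]. apply in_seq. destruct (HLu b Hb). lia.
Qed.

Let w (k : nat) : R := / (g * INR (2 ^ k)).

Lemma w_pos k : 0 < w k.
Proof. apply Rinv_0_lt_compat, Rmult_lt_0_compat; [lra|apply INR_pow2_pos]. Qed.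

Lemma sealed_bins_le :
  INR (length (filter (sealed s) (used_bins I c))) <= sumR (live s) (fun i => w (class_of s i)).
Proof.
  destruct Hgood as [Hwf _ _ Hd].
  set (Ls := filter (sealed s) (used_bins I c)).
  rewrite <- (Rmult_1_l (INR _)), <- sumR_const.
  apply Rle_trans with
    (sumR Ls (fun b => sumR (live s) (fun i => if Nat.eqb (bin_of s i) b then w (class_of s i) else 0))).
  - apply sumR_le. intros b Hb. apply filter_In in Hb as [_ Hsb]. destruct (Hd b Hsb) as [Hdense _].
    rewrite <- (sumR_filter (fun i => Nat.eqb (bin_of s i) b)).
    rewrite (sumR_ext _ _ (fun _ => w (bin_class s b))), sumR_const.
    + fold (items_in s b). fold (occupancy s b). unfold w.
      pose proof (INR_pow2_pos (bin_class s b)).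
      apply Rmult_le_reg_l with (g * INR (2 ^ bin_class s b)); [apply Rmult_lt_0_compat; lra|].
      rewrite <- Rmult_assoc, Rinv_r by (apply Rgt_not_eq, Rmult_lt_0_compat; lra). lra.
    + intros i Hi. apply filter_In in Hi as [Hi E]. apply Nat.eqb_eq in E.
      destruct (wf_item Hwf i Hi) as (_ & _ & Hcls & _). rewrite <- E, Hcls. reflexivity.
  - rewrite sumR_exchange. apply sumR_le. intros i Hi.
    rewrite sumR_indicator by (apply NoDup_filter, NoDup_nodup).
    destruct (in_dec _ _ _); [lra|]. left; apply w_pos.
Qed.

Lemma weight_split : (forall i, In i (live s) -> 0 <= isize I i) ->
  sumR (live s) (fun i => w (class_of s i)) <=
  sumR (live s) (fun i => if capped I s i then w (class_of s i) else 0) +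
    (2 / g) * sumR (live s) (isize I).
Proof.
  intros Hsz. rewrite <- sumR_scale, <- sumR_plus. apply sumR_le. intros i Hi.
  pose proof (Hsz i Hi). assert (0 <= 2 / g) by (apply Rlt_le, Rdiv_lt_0_compat; lra).
  unfold capped. destruct (Rle_dec _ _) as [Hc|Hc].
  - assert (0 <= 2 / g * isize I i) by (apply Rmult_le_pos; auto). lra.
  - apply Rnot_le_lt in Hc. unfold w. rewrite Rplus_0_l.
    replace (2 ^ S (class_of s i))%nat with (2 * 2 ^ class_of s i)%nat in Hc by (cbn; lia).
    rewrite mult_INR in Hc. cbn [INR] in Hc. pose proof (INR_pow2_pos (class_of s i)).
    rewrite Rinv_mult in Hc |- *.
    apply Rmult_le_reg_l with (g / 2); [apply Rdiv_lt_0_compat; lra|].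
    replace (g / 2 * (2 / g * isize I i)) with (isize I i) by (field; lra).
    replace (g / 2 * (/ g * / INR (2 ^ class_of s i))) with (/ (1 + 1) * / INR (2 ^ class_of s i))
      by (field; lra).
    lra.
Qed.

Lemma capped_weight_le :
  sumR (live s) (fun i => if capped I s i then w (class_of s i) else 0) <= INR N.
Proof.
  rewrite (sumR_partition (live s) (class_of s) N) by auto.
  replace (INR N) with (1 * INR (length (seq 0 N))) by (rewrite length_seq; ring).
  rewrite <- sumR_const.
  apply sumR_le. intros k _. rewrite sumR_filter.
  rewrite (sumR_ext _ _
    (fun i => w k * (if andb (Nat.eqb (class_of s i) k) (capped I s i) then 1 else 0))).
  - rewrite sumR_scale, <- INR_length_filter. fold (capped_count I s (live s) k).
    pose proof (wf_capped (good_wf Hgood) k). pose proof (INR_pow2_pos k).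
    unfold w. apply Rmult_le_reg_l with (g * INR (2 ^ k)); [apply Rmult_lt_0_compat; lra|].
    rewrite <- Rmult_assoc, Rinv_r, Rmult_1_l, Rmult_1_r; [lra|].
    apply Rgt_not_eq, Rmult_lt_0_compat; lra.
  - intros i _. destruct (Nat.eqb_spec (class_of s i) k) as [->|]; cbn; [destruct (capped I s i)|]; lra.
Qed.

Lemma open_bins_le : (forall i, In i (live s) -> 0 <= isize I i) ->
  INR (open_bins I c) <= 2 * INR N + (2 / g) * sumR (live s) (isize I).
Proof.
  intros Hsz. change (open_bins I c) with (length (used_bins I c)).
  rewrite <- (filter_length (sealed s)), plus_INR.
  pose proof sealed_bins_le. pose proof (weight_split Hsz). pose proof capped_weight_le.
  pose proof (le_INR _ _ unsealed_bins_le). lra.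
Qed.

End BinCount.

(* With [x = 1/(2 alpha)] we have [2/g = x + 1 <= 2x = 1/alpha]; the slack [(x - 1) opt >= x - 1]
   absorbs the term [ln (1/g) = O (x)] hidden in [class_bound]. *)
Lemma final_arith alpha rho opt : 0 < alpha < 1/2 -> 1 <= INR rho -> 1 <= opt ->
  let g := 4 * alpha / (1 + 2 * alpha) in
  2 * (class_bound g rho + 1) + (2 / g) * opt <= opt / alpha + 9 * (1 + ln (INR rho)).
Proof.
  intros Ha Hr Ho g.
  assert (Hg : 0 < g) by (apply Rdiv_lt_0_compat; lra).
  set (x := / (2 * alpha)). set (z := (1 + 2 * alpha) / (4 * alpha)).
  assert (Hx : 1 < x) by (rewrite <- Rinv_1; apply Rinv_lt_contravar; lra).
  assert (Hz : 0 < z) by (apply Rdiv_lt_0_compat; lra).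
  assert (Hzx : z <= x).
  { unfold z, x. apply Rmult_le_reg_r with (4 * alpha); [lra|].
    replace ((1 + 2 * alpha) / (4 * alpha) * (4 * alpha)) with (1 + 2 * alpha) by (field; lra).
    replace (/ (2 * alpha) * (4 * alpha)) with 2 by (field; lra). lra. }
  assert (Hzg : / g = z) by (unfold g, z; field; lra).
  assert (H2g : 2 / g = x + 1) by (unfold g, x; field; lra).
  assert (Hoa : opt / alpha = 2 * x * opt) by (unfold x; field; lra).
  pose proof ln_lt_2 as L2a. assert (L2b : ln 2 <= 1) by (pose proof (ln_le_sub1 2); lra).
  set (a := ln (INR rho)). assert (Ha0 : 0 <= a) by apply ln_INR_nonneg.
  assert (Hlnz : ln z <= 2 * ln 2 + z / 4 - 1).
  { replace z with (2 * (2 * (z / 4))) at 1 by field. rewrite !ln_mult by lra.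
    pose proof (ln_le_sub1 (z / 4)). lra. }
  assert (Hln : ln (INR rho / g) = a + ln z).
  { unfold Rdiv. rewrite ln_mult, Hzg; [reflexivity|lra|apply Rinv_0_lt_compat; lra]. }
  assert (Ha2 : a / ln 2 <= 2 * a).
  { apply Rmult_le_reg_r with (ln 2); [lra|]. unfold Rdiv. rewrite Rmult_assoc, Rinv_l by lra. nra. }
  assert (Hz2 : ln z / ln 2 <= 2 + z / 2).
  { apply Rmult_le_reg_r with (ln 2); [lra|]. unfold Rdiv. rewrite Rmult_assoc, Rinv_l by lra. nra. }
  unfold class_bound. rewrite Hln, H2g, Hoa.
  replace ((a + ln z) / ln 2) with (a / ln 2 + ln z / ln 2) by (field; lra).
  assert ((x - 1) * 1 <= (x - 1) * opt) by (apply Rmult_le_compat_l; lra).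
  lra.
Qed.

Lemma packable_volume I t m : packable I t m -> sumR (present_items I t) (isize I) <= INR m.
Proof.
  intros [f [Hf Hb]]. rewrite (sumR_partition _ f m) by auto.
  replace (INR m) with (1 * INR (length (seq 0 m))) by (rewrite length_seq; ring).
  rewrite <- sumR_const. apply sumR_le. intros b Hb'. apply in_seq in Hb'.
  specialize (Hb b ltac:(lia)). rewrite sumR_map in Hb. exact Hb.
Qed.

Section Guarantees.
Variables (I : instance) (g : R) (es : list event).
Hypothesis Hg : 0 < g < 1.
Hypothesis HV : Forall valid_item I.
Hypothesis Hes : valid_order I es.
Lemma dbp_migrations :
  run I (dbp_alg g) es <> None /\ INR (migrations I (dbp_alg g) es) <= g / (1 - g) * INR (length I).
Proof.
  assert (Hpres : forall t, (n_present I t <= length I)%nat).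
  { intros t. unfold n_present, present_items. rewrite <- (length_seq (length I) 0) at 2.
    apply filter_length_le. }
  destruct (run_invariant_prefix I g (length I) es Hg HV Hes Hpres es [] (app_nil_r es))
    as (c & Hrun & _ & _ & Hpot).
  split; [congruence|]. rewrite (count_departures I es (proj1 Hes)) in Hpot.
  assert (0 <= g / (1 - g) * potential (state_of g (map (obs_of I) es))); [|lra].
  apply Rmult_le_pos; [apply Rlt_le, Rdiv_lt_0_compat; lra|apply sumR_nonneg; intros; apply pos_INR].
Qed.

Lemma live_present t c rho : let p := firstn (n_events_upto I es t) es in
  run_invariant I g (class_bound g rho) p c ->
  incl (live (state_of g (map (obs_of I) p))) (present_items I t).
Proof.
  intros p (Hgood & Hpend & _) j Hj. destruct Hes as [Hperm Hsort].
  destruct (prefix_time I es t Hsort) as [Hbefore Hafter].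
  destruct (Hpend j Hj) as [HA HD].
  apply (pending_present I p (skipn (n_events_upto I es t) es) t j); auto.
  - unfold p. rewrite firstn_skipn. exact Hperm.
  - apply (wf_item (good_wf Hgood) j Hj).
Qed.

Lemma dbp_open_bins rho t opt c : is_rho I rho -> is_opt I t opt ->
  run I (dbp_alg g) (firstn (n_events_upto I es t) es) = Some c ->
  open_bins I c = O \/
  (1 <= INR rho /\ 1 <= INR opt /\ INR (open_bins I c) <= 2 * (class_bound g rho + 1) + 2 / g * INR opt).
Proof.
  intros [_ Hrho] [Hopt _] Hrun. set (p := firstn (n_events_upto I es t) es) in *.
  destruct (run_invariant_prefix I g rho es Hg HV Hes Hrho p _ (firstn_skipn _ es))
    as (c0 & Hrun0 & Hinv).
  rewrite Hrun0 in Hrun. injection Hrun as <-.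
  pose proof (live_present t c0 rho Hinv) as Hpres. fold p in Hpres. destruct Hinv as (Hgood & _ & _).
  set (s := state_of g (map (obs_of I) p)) in *.
  assert (Hsz : forall i, In i (present_items I t) -> 0 <= isize I i).
  { intros i Hi. apply present_In in Hi as [HiI _].
    destruct (valid_nth I i HV HiI) as (_ & [Hs _] & _). exact Hs. }
  destruct (live s) as [|j0 l] eqn:Elive.
  { left. change (length (used_bins I c0) = O). apply length_zero_iff_nil.
    destruct (used_bins I c0) as [|b l] eqn:E; [reflexivity|].
    assert (Hb : In b (used_bins I c0)) by (rewrite E; left; auto).
    destruct (used_bins_live I s c0 b (good_represents Hgood) Hb) as [i [Hi _]].
    rewrite Elive in Hi. contradiction. }
  right. assert (Hj0 : In j0 (present_items I t)) by (apply Hpres; left; auto).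
  assert (Hj0' : In j0 (live s)) by (rewrite Elive; left; auto). rewrite <- Elive in *.
  split; [|split].
  - apply (le_INR 1). eapply Nat.le_trans; [|apply (Hrho t)]. unfold n_present.
    destruct (present_items I t); [contradiction|cbn; lia].
  - apply (le_INR 1). destruct Hopt as [f [Hf _]]. specialize (Hf j0 Hj0). lia.
  - destruct (wf_item (good_wf Hgood) j0 Hj0') as (_ & _ & _ & _ & Hcls).
    assert (HB : 0 <= class_bound g rho) by (pose proof (pos_INR (class_of s j0)); lra).
    destruct (nat_above _ HB) as [N [HN HNB]].
    assert (Hvol : sumR (live s) (isize I) <= INR opt).
    { eapply Rle_trans; [|apply packable_volume; exact Hopt]. apply sumR_incl_le; auto.
      apply (wf_nodup (good_wf Hgood)). }
    pose proof (open_bins_le I g _ s c0 N Hg Hgood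
      (fun i Hi => HN _ (proj2 (proj2 (proj2 (proj2 (wf_item (good_wf Hgood) i Hi))))))
      (fun i Hi => Hsz i (Hpres i Hi))).
    assert (2 / g * sumR (live s) (isize I) <= 2 / g * INR opt)
      by (apply Rmult_le_compat_l; [apply Rlt_le, Rdiv_lt_0_compat|]; lra).
    lra.
Qed.

End Guarantees.

Theorem theorem2 :
  exists C : R,
  forall alpha : R, 0 < alpha < 1/2 ->
  exists A : algorithm,
  forall (I : instance), Forall valid_item I ->
  forall es : list event, valid_order I es ->
    run I A es <> None /\
    INR (migrations I A es) <= (4 * alpha / (1 - 2 * alpha)) * INR (length I) /\
    (forall (rho : nat), is_rho I rho ->
     forall (t : R) (opt : nat), is_opt I t opt ->
     forall c : config, run I A (firstn (n_events_upto I es t) es) = Some c ->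
       INR (open_bins I c) <= INR opt / alpha + C * (1 + ln (INR rho))).
Proof.
  exists 9. intros alpha Ha. set (g := 4 * alpha / (1 + 2 * alpha)).
  assert (Hg : 0 < g < 1).
  { split; [apply Rdiv_lt_0_compat; lra|].
    apply Rmult_lt_reg_r with (1 + 2 * alpha); [lra|]. unfold g, Rdiv. rewrite Rmult_assoc, Rinv_l; lra. }
  exists (dbp_alg g). intros I HV es Hes.
  destruct (dbp_migrations I g es Hg HV Hes) as [Hrun Hmig].
  replace (4 * alpha / (1 - 2 * alpha)) with (g / (1 - g)) by (unfold g; field; lra).
  split; [exact Hrun|split; [exact Hmig|]].
  intros rho Hrho t opt Hopt c Hc.
  destruct (dbp_open_bins I g es Hg HV Hes rho t opt c Hrho Hopt Hc) as [->|(Hrho1 & Hopt1 & Hbins)].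
  - pose proof (ln_INR_nonneg rho). pose proof (pos_INR opt).
    assert (0 <= INR opt / alpha) by (apply Rmult_le_pos; [|apply Rlt_le, Rinv_0_lt_compat]; lra).
    cbn. lra.
  - pose proof (final_arith alpha rho (INR opt) Ha Hrho1 Hopt1) as Hf. fold g in Hf. lra.
Qed.
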